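(* There exists a bounded Jordan domain $D\subsetneq\mathbb{R}^2$ which is $\varphi$-uniform for some $\varphi$, such that $\mathbb{R}^2\setminus\overline{D}$ is not $\psi$-uniform for any $\psi$.
   Context: For a domain $G\subsetneq\mathbb{R}^n$ and $x\in G$, $\delta(x)$ denotes the Euclidean distance from $x$ to $\partial G$. The quasihyperbolic metric is $k_G(x,y)=\inf_\gamma\int_\gamma\frac{|dz|}{\delta(z)}$, the infimum over rectifiable paths joining $x,y$ in $G$. Given a strictly increasing homeomorphism $\varphi:[0,\infty)\to[0,\infty)$ with $\varphi(0)=0$, $G$ is $\varphi$-uniform if $k_G(x,y)\le\varphi\big(\frac{|x-y|}{\min\{\delta(x),\delta(y)\}}\big)$ for all $x,y\in G$; ''not $\psi$-uniform for any $\psi$'' means this fails for every such homeomorphism $\psi$. *)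

From Stdlib Require Import Reals.
From Coquelicot Require Import Coquelicot.
Open Scope R_scope.

Definition pt : Type := (R * R)%type.
Definition dist2 (p q : pt) : R :=
  sqrt ((fst p - fst q) ^ 2 + (snd p - snd q) ^ 2).
Definition norm2 (p : pt) : R := sqrt (fst p ^ 2 + snd p ^ 2).

Definition is_open (G : pt -> Prop) : Prop :=
  forall x, G x -> exists r, 0 < r /\ forall y, dist2 x y < r -> G y.
Definition closure (G : pt -> Prop) (x : pt) : Prop :=
  forall r, 0 < r -> exists y, G y /\ dist2 x y < r.
Definition interior (G : pt -> Prop) (x : pt) : Prop :=
  exists r, 0 < r /\ forall y, dist2 x y < r -> G y.
Definition boundary (G : pt -> Prop) (x : pt) : Prop :=
  closure G x /\ ~ interior G x.
Definition is_connected (G : pt -> Prop) : Prop :=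
  ~ exists U V : pt -> Prop, is_open U /\ is_open V /\
      (forall x, G x -> U x \/ V x) /\
      (forall x, G x -> U x -> V x -> False) /\
      (exists x, G x /\ U x) /\ (exists x, G x /\ V x).
Definition is_domain (G : pt -> Prop) : Prop :=
  (exists x, G x) /\ is_open G /\ is_connected G.
Definition is_bounded (G : pt -> Prop) : Prop :=
  exists M, forall x, G x -> norm2 x <= M.

Definition cont01 (g : R -> pt) : Prop :=
  forall t, 0 <= t <= 1 -> forall eps, 0 < eps -> exists eta, 0 < eta /\
    forall s, 0 <= s <= 1 -> Rabs (s - t) < eta -> dist2 (g s) (g t) < eps.

Definition jordan_curve (g : R -> pt) : Prop :=
  cont01 g /\ g 0 = g 1 /\
  (forall s t, 0 <= s < 1 -> 0 <= t < 1 -> g s = g t -> s = t).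
Definition jordan_domain (D : pt -> Prop) : Prop :=
  is_domain D /\ exists g, jordan_curve g /\
    forall z, boundary D z <-> exists t, 0 <= t <= 1 /\ g t = z.

Fixpoint rsum (f : nat -> R) (n : nat) : R :=
  match n with O => 0 | S k => rsum f k + f k end.

Definition partition (a b : R) (n : nat) (p : nat -> R) : Prop :=
  p O = a /\ p n = b /\ (forall i, (i < n)%nat -> p i < p (S i)).

Definition arclen (g : R -> pt) (a b : R) : Rbar :=
  Lub_Rbar (fun v => exists n p, partition a b n p /\
              v = rsum (fun i => dist2 (g (p i)) (g (p (S i)))) n).
Definition rectifiable (g : R -> pt) : Prop := is_finite (arclen g 0 1).
Definition arcfun (g : R -> pt) (t : R) : R := real (arclen g 0 t).

(** Line integral  \int_g w ds  as a Riemann-Stieltjes integral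
    \int_0^1 w(g t) d s(t) with respect to the arc length function. *)
Definition is_line_int (w : pt -> R) (g : R -> pt) (I : R) : Prop :=
  forall eps, 0 < eps -> exists eta, 0 < eta /\
    forall n p xi, partition 0 1 n p ->
      (forall i, (i < n)%nat -> p (S i) - p i < eta) ->
      (forall i, (i < n)%nat -> p i <= xi i <= p (S i)) ->
      Rabs (rsum (fun i => w (g (xi i)) * (arcfun g (p (S i)) - arcfun g (p i))) n
            - I) < eps.

Definition delta (G : pt -> Prop) (x : pt) : R :=
  real (Glb_Rbar (fun r => exists z, boundary G z /\ r = dist2 x z)).

Definition path_in (G : pt -> Prop) (x y : pt) (g : R -> pt) : Prop :=
  cont01 g /\ g 0 = x /\ g 1 = y /\ (forall t, 0 <= t <= 1 -> G (g t)).

Definition qh_metric (G : pt -> Prop) (x y : pt) : Rbar :=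
  Glb_Rbar (fun v => exists g, path_in G x y g /\ rectifiable g /\
              is_line_int (fun z => / delta G z) g v).

Definition homeo0 (phi : R -> R) : Prop :=
  phi 0 = 0 /\
  (forall s t, 0 <= s -> s < t -> phi s < phi t) /\
  (forall t, 0 <= t -> forall eps, 0 < eps -> exists eta, 0 < eta /\
     forall s, 0 <= s -> Rabs (s - t) < eta -> Rabs (phi s - phi t) < eps) /\
  (forall y, 0 <= y -> exists x, 0 <= x /\ phi x = y).

Definition phi_uniform (G : pt -> Prop) (phi : R -> R) : Prop :=
  forall x y, G x -> G y ->
    Rbar_le (qh_metric G x y)
            (Finite (phi (dist2 x y / Rmin (delta G x) (delta G y)))).

Definition ext_closure (D : pt -> Prop) (x : pt) : Prop := ~ closure D x.

From Pilot Require Import Defs.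
From Stdlib Require Import Reals.
From Coquelicot Require Import Coquelicot.
Open Scope R_scope.
From Stdlib Require Import Rgeom Lra Lia Psatz Classical Arith.

(* The cusp D = {(u, v) : 0 < u < 1, |v| < u^2} works.  Inside D the distance to the
   boundary is comparable to the margin m(z) = min (u^2 - |v|, 1 - u), and a segment keeps at
   least half of the smaller margin of its endpoints when it ends at the centre (1/2, 0) or when
   |x - y|^2 <= 2 m.  Joining x and y directly in the second case and through the centre
   otherwise gives k_D(x, y) <= 9 t^2 + 6 t, t = |x - y| / min (delta x, delta y).
   Outside the closed cusp, the points (s, +-2 s^2) are 4 s^2 apart and at distance at least
   s^2 / 2 from the boundary, so their ratio is at most 8.  A path joining them has to cross
   the axis outside [0, 1], at distance at least s from (s, 2 s^2), while along it
   delta(z) <= s^2 + |z - (s, 2 s^2)|; hence its quasihyperbolic length is at least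
   ln (1 + 1 / s), which is unbounded as s -> 0. *)

Lemma dist2_nonneg p q : 0 <= dist2 p q.
Proof. apply sqrt_pos. Qed.

Lemma dist2_sym p q : dist2 p q = dist2 q p.
Proof. unfold dist2; f_equal; ring. Qed.

Lemma dist2_refl p : dist2 p p = 0.
Proof.
  unfold dist2. replace ((fst p - fst p) ^ 2 + (snd p - snd p) ^ 2) with 0 by ring.
  apply sqrt_0.
Qed.

Lemma dist2_triangle p q r : dist2 p r <= dist2 p q + dist2 q r.
Proof.
  pose proof (Rgeom.triangle (fst p) (snd p) (fst r) (snd r) (fst q) (snd q)) as H.
  unfold dist_euc in H. rewrite !Rsqr_pow2 in H. exact H.
Qed.

Lemma dist2_sq p q : dist2 p q ^ 2 = (fst p - fst q) ^ 2 + (snd p - snd q) ^ 2.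
Proof.
  apply pow2_sqrt.
  pose proof (pow2_ge_0 (fst p - fst q)); pose proof (pow2_ge_0 (snd p - snd q)); lra.
Qed.

Lemma Rabs_sqrt_pow2 a : Rabs a = sqrt (a ^ 2).
Proof. rewrite <- pow2_abs, sqrt_pow2; [reflexivity | apply Rabs_pos]. Qed.

Lemma dist2_fst p q : Rabs (fst p - fst q) <= dist2 p q.
Proof.
  rewrite Rabs_sqrt_pow2. apply sqrt_le_1_alt.
  pose proof (pow2_ge_0 (snd p - snd q)). lra.
Qed.

Lemma dist2_snd p q : Rabs (snd p - snd q) <= dist2 p q.
Proof.
  rewrite Rabs_sqrt_pow2. apply sqrt_le_1_alt.
  pose proof (pow2_ge_0 (fst p - fst q)). lra.
Qed.

Lemma dist2_eq_0 p q : dist2 p q = 0 -> p = q.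
Proof.
  intros H. pose proof (dist2_fst p q). pose proof (dist2_snd p q).
  pose proof (Rabs_pos (fst p - fst q)). pose proof (Rabs_pos (snd p - snd q)).
  destruct p as [a b], q as [c d]; cbn [fst snd] in *.
  assert (Ea : Rabs (a - c) = 0) by lra. assert (Eb : Rabs (b - d) = 0) by lra.
  apply Rabs_eq_0 in Ea, Eb. f_equal; lra.
Qed.

Lemma dist2_le_l1 p q : dist2 p q <= Rabs (fst p - fst q) + Rabs (snd p - snd q).
Proof.
  unfold dist2. set (a := fst p - fst q); set (b := snd p - snd q).
  pose proof (Rabs_pos a); pose proof (Rabs_pos b).
  rewrite <- (sqrt_pow2 (Rabs a + Rabs b)) by lra.
  apply sqrt_le_1_alt. rewrite <- (pow2_abs a), <- (pow2_abs b). nra.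
Qed.

Lemma dist2_lt_coord p q r :
  dist2 p q < r -> Rabs (fst p - fst q) < r /\ Rabs (snd p - snd q) < r.
Proof. pose proof (dist2_fst p q); pose proof (dist2_snd p q); lra. Qed.

Lemma dist2_vertical u v w : dist2 (u, v) (u, w) = Rabs (v - w).
Proof.
  unfold dist2; cbn [fst snd]. rewrite Rabs_sqrt_pow2. f_equal. ring.
Qed.

Lemma dist2_horizontal u w v : dist2 (u, v) (w, v) = Rabs (u - w).
Proof.
  unfold dist2; cbn [fst snd]. rewrite Rabs_sqrt_pow2. f_equal. ring.
Qed.

Definition lerp (x y : pt) (l : R) : pt :=
  (fst x + l * (fst y - fst x), snd x + l * (snd y - snd x)).

Lemma dist2_lerp x y a b :
  dist2 (lerp x y a) (lerp x y b) = Rabs (a - b) * dist2 x y.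
Proof.
  unfold dist2.
  transitivity (sqrt ((a - b) ^ 2 * ((fst x - fst y) ^ 2 + (snd x - snd y) ^ 2))).
  - f_equal. unfold lerp; cbn [fst snd]. ring.
  - rewrite sqrt_mult_alt by apply pow2_ge_0. rewrite <- Rabs_sqrt_pow2. reflexivity.
Qed.

Lemma lerp0 x y : lerp x y 0 = x.
Proof. destruct x; unfold lerp; simpl; f_equal; ring. Qed.

Lemma lerp1 x y : lerp x y 1 = y.
Proof. destruct x, y; unfold lerp; simpl; f_equal; ring. Qed.

Lemma lerp_sym x y l : lerp x y l = lerp y x (1 - l).
Proof. unfold lerp; f_equal; ring. Qed.

Lemma lerp_lerp_mid_l x y l : lerp x (lerp x y (1/2)) l = lerp x y (l / 2).
Proof. unfold lerp; cbn [fst snd]; f_equal; field. Qed.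

Lemma lerp_lerp_mid_r x y l : lerp (lerp x y (1/2)) y l = lerp x y (1/2 + l / 2).
Proof. unfold lerp; cbn [fst snd]; f_equal; field. Qed.

Lemma dist2_lerp_r x y l : 0 <= l -> dist2 x (lerp x y l) = l * dist2 x y.
Proof.
  intros Hl. rewrite <- (lerp0 x y) at 1. rewrite dist2_lerp.
  rewrite Rabs_minus_sym, Rminus_0_r, Rabs_right by lra. reflexivity.
Qed.

Lemma dist2_lerp_l x y l : l <= 1 -> dist2 (lerp x y l) y = (1 - l) * dist2 x y.
Proof.
  intros Hl. rewrite <- (lerp1 x y) at 2. rewrite dist2_lerp.
  rewrite Rabs_minus_sym, Rabs_right by lra. reflexivity.
Qed.

Lemma Glb_Rbar_nonneg_spec (E : R -> Prop) :
  (exists x, E x) -> (forall x, E x -> 0 <= x) ->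
  Glb_Rbar E = Finite (real (Glb_Rbar E)) /\
  (forall x, E x -> real (Glb_Rbar E) <= x) /\
  (forall r, (forall x, E x -> r <= x) -> r <= real (Glb_Rbar E)).
Proof.
  intros [x0 Hx0] Hpos. pose proof (Glb_Rbar_correct E) as [Hlb Hgr].
  destruct (Glb_Rbar E) as [l| |].
  - split; [reflexivity|]. split.
    + intros x Hx. exact (Hlb x Hx).
    + intros r Hr. assert (H : Rbar_le (Finite r) (Finite l)) by (apply Hgr; intros x Hx; apply Hr, Hx).
      exact H.
  - exact (False_ind _ (Hlb x0 Hx0)).
  - assert (H : Rbar_le (Finite 0) m_infty) by (apply Hgr; intros x Hx; apply Hpos, Hx).
    contradiction.
Qed.

Lemma Lub_Rbar_bounded_spec (E : R -> Prop) M :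
  (exists x, E x) -> (forall x, E x -> x <= M) ->
  Lub_Rbar E = Finite (real (Lub_Rbar E)) /\
  (forall x, E x -> x <= real (Lub_Rbar E)) /\
  (forall r, (forall x, E x -> x <= r) -> real (Lub_Rbar E) <= r).
Proof.
  intros [x0 Hx0] Hb. pose proof (Lub_Rbar_correct E) as [Hub Hle].
  destruct (Lub_Rbar E) as [l| |].
  - split; [reflexivity|]. split.
    + intros x Hx. exact (Hub x Hx).
    + intros r Hr. assert (H : Rbar_le (Finite l) (Finite r)) by (apply Hle; intros x Hx; apply Hr, Hx).
      exact H.
  - assert (H : Rbar_le p_infty (Finite M)) by (apply Hle; intros x Hx; apply Hb, Hx).
    contradiction.
  - exact (False_ind _ (Hub x0 Hx0)).
Qed.

Section DistanceToBoundary.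
Variable G : pt -> Prop.

Lemma delta_le_dist z b : boundary G b -> delta G z <= dist2 z b.
Proof.
  intros Hb. unfold delta.
  destruct (Glb_Rbar_nonneg_spec (fun r => exists z0, boundary G z0 /\ r = dist2 z z0))
    as [_ [H _]].
  - exists (dist2 z b); eauto.
  - intros x [z0 [_ ->]]; apply dist2_nonneg.
  - apply H; eauto.
Qed.

Hypothesis boundary_nonempty : exists b, boundary G b.

Lemma delta_ge z r : (forall b, boundary G b -> r <= dist2 z b) -> r <= delta G z.
Proof.
  intros Hr. destruct boundary_nonempty as [b Hb]. unfold delta.
  destruct (Glb_Rbar_nonneg_spec (fun r => exists z0, boundary G z0 /\ r = dist2 z z0))
    as [_ [_ H]].
  - exists (dist2 z b); eauto.
  - intros x [z0 [_ ->]]; apply dist2_nonneg.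
  - apply H. intros x [z0 [Hz0 ->]]. auto.
Qed.

Lemma delta_ge_ball z r : (forall y, dist2 z y < r -> G y) -> r <= delta G z.
Proof.
  intros Hball. apply delta_ge. intros b [_ Hni].
  apply Rnot_lt_le. intros Hbr. apply Hni. exists (r - dist2 z b). split; [lra|].
  intros y Hy. apply Hball. pose proof (dist2_triangle z b y). lra.
Qed.

Lemma delta_lipschitz z z' : Rabs (delta G z - delta G z') <= dist2 z z'.
Proof.
  assert (Hlip : forall p q, delta G p <= delta G q + dist2 p q).
  { intros p q. enough (delta G p - dist2 p q <= delta G q) by lra.
    apply delta_ge. intros b Hb. pose proof (delta_le_dist p b Hb).
    pose proof (dist2_triangle p q b). lra. }
  pose proof (Hlip z z'). pose proof (Hlip z' z). rewrite dist2_sym in H0.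
  apply Rabs_le. lra.
Qed.

End DistanceToBoundary.

Lemma rsum_S f n : rsum f (S n) = rsum f n + f n.
Proof. reflexivity. Qed.

Lemma rsum_ext f g n : (forall i, (i < n)%nat -> f i = g i) -> rsum f n = rsum g n.
Proof.
  induction n as [|n IH]; intros H; simpl; auto.
  rewrite IH by (intros; apply H; lia). rewrite H by lia. reflexivity.
Qed.

Lemma rsum_le f g n : (forall i, (i < n)%nat -> f i <= g i) -> rsum f n <= rsum g n.
Proof.
  induction n as [|n IH]; intros H; simpl; [lra|].
  pose proof (IH (fun i Hi => H i ltac:(lia))). pose proof (H n ltac:(lia)). lra.
Qed.

Lemma rsum_minus f g n : rsum (fun i => f i - g i) n = rsum f n - rsum g n.
Proof. induction n as [|n IH]; simpl; [ring|]. rewrite IH. ring. Qed.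

Lemma rsum_scal c f n : rsum (fun i => c * f i) n = c * rsum f n.
Proof. induction n as [|n IH]; simpl; [ring|]. rewrite IH. ring. Qed.

Lemma rsum_abs f n : Rabs (rsum f n) <= rsum (fun i => Rabs (f i)) n.
Proof.
  induction n as [|n IH]; simpl; [rewrite Rabs_R0; lra|].
  eapply Rle_trans; [apply Rabs_triang|]. lra.
Qed.

Lemma rsum_telescope q n : rsum (fun i => q (S i) - q i) n = q n - q O.
Proof. induction n as [|n IH]; simpl; [ring|]. rewrite IH. ring. Qed.

Lemma rsum_le_nonneg_tail f N n : (N <= n)%nat ->
  (forall i, (N <= i < n)%nat -> 0 <= f i) -> rsum f N <= rsum f n.
Proof.
  intros HNn Hf. induction n as [|n IH].
  - replace N with O by lia. lra.
  - destruct (Nat.eq_dec N (S n)) as [->|HN]; [lra|]. simpl.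
    pose proof (IH ltac:(lia) (fun i Hi => Hf i ltac:(lia))). pose proof (Hf n ltac:(lia)). lra.
Qed.

Lemma partition_range a b n p : partition a b n p -> forall i, (i <= n)%nat -> a <= p i <= b.
Proof.
  intros [H0 [Hn Hinc]].
  assert (Hmono : forall i j, (i <= j <= n)%nat -> p i <= p j).
  { intros i j Hij. induction j as [|j IH].
    - replace i with O by lia. lra.
    - destruct (Nat.eq_dec i (S j)) as [->|]; [lra|].
      pose proof (IH ltac:(lia)). pose proof (Hinc j ltac:(lia)). lra. }
  intros i Hi. rewrite <- H0, <- Hn. split; apply Hmono; lia.
Qed.

(** * Lipschitz curves and upper bounds for the quasihyperbolic metric *)

Definition lipon (g : R -> pt) K a b :=
  forall s t, a <= s <= b -> a <= t <= b -> dist2 (g s) (g t) <= K * Rabs (s - t).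

Lemma lipon_glue g K a b c : a <= b <= c -> lipon g K a b -> lipon g K b c -> lipon g K a c.
Proof.
  intros Hb H1 H2 s t Hs Ht.
  destruct (Rle_dec s b), (Rle_dec t b).
  - apply H1; lra.
  - eapply Rle_trans; [apply (dist2_triangle _ (g b))|].
    pose proof (H1 s b ltac:(lra) ltac:(lra)) as E1. pose proof (H2 b t ltac:(lra) ltac:(lra)) as E2.
    rewrite Rabs_left1 in E1, E2 |- * by lra. lra.
  - eapply Rle_trans; [apply (dist2_triangle _ (g b))|].
    pose proof (H2 s b ltac:(lra) ltac:(lra)) as E1. pose proof (H1 b t ltac:(lra) ltac:(lra)) as E2.
    rewrite Rabs_right in E1, E2 |- * by lra. lra.
  - apply H2; lra.
Qed.

Lemma lipon_cont01 g K : 0 <= K -> lipon g K 0 1 -> cont01 g.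
Proof.
  intros HK Hl t Ht eps Heps. exists (eps / (K + 1)). split.
  - apply Rdiv_lt_0_compat; lra.
  - intros s Hs Hst. eapply Rle_lt_trans; [apply Hl; auto|].
    apply Rle_lt_trans with (K * (eps / (K + 1))).
    + apply Rmult_le_compat_l; lra.
    + apply Rmult_lt_reg_r with (K + 1); [lra|].
      replace (K * (eps / (K + 1)) * (K + 1)) with (K * eps) by (field; lra). nra.
Qed.

Lemma lerp_lipon x y : lipon (lerp x y) (dist2 x y) 0 1.
Proof. intros s t _ _. rewrite dist2_lerp. lra. Qed.

Lemma lerp_cont01 x y : cont01 (lerp x y).
Proof. eapply lipon_cont01; [apply dist2_nonneg|apply lerp_lipon]. Qed.

Definition rlip (h : R -> R) M := forall s t, Rabs (h s - h t) <= M * Rabs (s - t).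

Section LipschitzIntegrand.
Variables (h : R -> R) (M : R).
Hypotheses (HM : 0 <= M) (Hh : rlip h M).

Lemma rlip_continuous x : continuous h x.
Proof.
  apply continuity_pt_filterlim. intros eps Heps. exists (eps / (M + 1)). split.
  - apply Rdiv_lt_0_compat; lra.
  - intros y [_ Hy]. simpl in *. unfold R_dist in *.
    eapply Rle_lt_trans; [apply Hh|].
    apply Rle_lt_trans with (M * (eps / (M + 1))).
    + apply Rmult_le_compat_l; lra.
    + apply Rmult_lt_reg_r with (M + 1); [lra|].
      replace (M * (eps / (M + 1)) * (M + 1)) with (M * eps) by (field; lra). nra.
Qed.

Lemma rlip_ex_RInt a b : ex_RInt h a b.
Proof.
  apply (@ex_RInt_continuous R_CompleteNormedModule). intros; apply rlip_continuous.
Qed.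

Lemma RInt_partition (p : nat -> R) k :
  RInt h (p O) (p k) = rsum (fun i => RInt h (p i) (p (S i))) k.
Proof.
  induction k as [|k IH]; simpl.
  - exact (@RInt_point R_CompleteNormedModule _ _).
  - rewrite <- IH, <- (RInt_Chasles h (p O) (p k) (p (S k))) by apply rlip_ex_RInt.
    reflexivity.
Qed.

Lemma RInt_tag_error a b xi eta : a <= xi <= b -> b - a < eta ->
  Rabs (h xi * (b - a) - RInt h a b) <= M * eta * (b - a).
Proof.
  intros Hxi Hab.
  pose proof (@ex_RInt_const R_CompleteNormedModule a b (h xi)) as EC.
  assert (E : RInt h a b - h xi * (b - a) = RInt (fun t => h t - h xi) a b).
  { etransitivity; [|symmetry; exact (RInt_minus _ _ _ _ (rlip_ex_RInt a b) EC)].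
    rewrite RInt_const. unfold minus, plus, opp, scal; simpl. unfold mult; simpl. ring. }
  rewrite Rabs_minus_sym, E, Rmult_comm.
  apply abs_RInt_le_const; [lra| |].
  - apply (ex_RInt_minus h (fun _ => h xi)); [apply rlip_ex_RInt|exact EC].
  - intros t Ht. eapply Rle_trans; [apply Hh|]. apply Rmult_le_compat_l; [lra|].
    apply Rabs_le. lra.
Qed.

(* A tagged sum of [w (g xi) * (arc length increment)] is then [L] times a Riemann sum of [h]. *)
Lemma is_line_int_const_speed w g L : 0 <= L ->
  (forall t, 0 <= t <= 1 -> h t = w (g t)) ->
  (forall t, 0 <= t <= 1 -> arcfun g t = L * t) ->
  is_line_int w g (L * RInt h 0 1).
Proof.
  intros HL Hw Ha eps Heps.
  pose proof (Rmult_le_pos _ _ HL HM) as HLM.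
  set (eta := eps / (L * M + 1)).
  exists eta. split; [apply Rdiv_lt_0_compat; lra|].
  intros n p xi Hp Hmesh Hxi.
  pose proof (partition_range _ _ _ _ Hp) as Hr.
  assert (Hsum : rsum (fun i => w (g (xi i)) * (arcfun g (p (S i)) - arcfun g (p i))) n
                 = L * rsum (fun i => h (xi i) * (p (S i) - p i)) n).
  { rewrite <- rsum_scal. apply rsum_ext. intros i Hi.
    pose proof (Hr i ltac:(lia)). pose proof (Hr (S i) ltac:(lia)). pose proof (Hxi i Hi).
    rewrite !Ha, Hw by lra. ring. }
  destruct Hp as [Hp0 [Hpn Hinc]].
  rewrite Hsum, <- Hp0, <- Hpn at 1. rewrite RInt_partition, <- Rmult_minus_distr_l, <- rsum_minus.
  rewrite Rabs_mult, (Rabs_right L) by lra.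
  assert (Hb : Rabs (rsum (fun i => h (xi i) * (p (S i) - p i) - RInt h (p i) (p (S i))) n)
               <= M * eta).
  { eapply Rle_trans; [apply rsum_abs|].
    eapply Rle_trans.
    - apply rsum_le with (g := fun i => M * eta * (p (S i) - p i)).
      intros i Hi. apply RInt_tag_error; auto.
    - rewrite rsum_scal, rsum_telescope, Hp0, Hpn. lra. }
  apply Rle_lt_trans with (L * (M * eta)); [apply Rmult_le_compat_l; auto|].
  unfold eta. replace (L * (M * (eps / (L * M + 1)))) with (eps * (L * M / (L * M + 1)))
    by (field; lra).
  rewrite <- (Rmult_1_r eps) at 2. apply Rmult_lt_compat_l; [lra|].
  apply Rmult_lt_reg_r with (L * M + 1); [lra|]. field_simplify; lra.
Qed.

End LipschitzIntegrand.

Lemma arclen_const_speed g L t : 0 <= t <= 1 -> lipon g L 0 1 ->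
  (exists n p, partition 0 t n p /\ L * t = rsum (fun i => dist2 (g (p i)) (g (p (S i)))) n) ->
  arclen g 0 t = Finite (L * t).
Proof.
  intros Ht Hl [n0 [p0 [Hp0 Hv0]]]. unfold arclen.
  set (E := fun v => exists n p, partition 0 t n p /\
                       v = rsum (fun i => dist2 (g (p i)) (g (p (S i)))) n).
  assert (Hup : forall v, E v -> v <= L * t).
  { intros v [n [p [Hp ->]]]. pose proof (partition_range _ _ _ _ Hp) as Hr.
    destruct Hp as [Hpa [Hpb Hinc]].
    eapply Rle_trans.
    - apply rsum_le with (g := fun i => L * (p (S i) - p i)). intros i Hi.
      pose proof (Hr i ltac:(lia)). pose proof (Hr (S i) ltac:(lia)). pose proof (Hinc i Hi).
      eapply Rle_trans; [apply Hl; lra|]. rewrite Rabs_left1 by lra. lra.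
    - rewrite rsum_scal, rsum_telescope, Hpa, Hpb. lra. }
  destruct (Lub_Rbar_bounded_spec E (L * t)) as [Hf [Hub Hlst]]; [exists (L * t); exists n0, p0; auto|auto|].
  rewrite Hf. f_equal. apply Rle_antisym; [apply Hlst; auto|apply Hub; exists n0, p0; auto].
Qed.

Definition clamp (t : R) := Rmax 0 (Rmin 1 t).

Lemma clamp_range t : 0 <= clamp t <= 1.
Proof. unfold clamp. split; [apply Rmax_l|]. apply Rmax_lub; [lra|apply Rmin_l]. Qed.

Lemma clamp_id t : 0 <= t <= 1 -> clamp t = t.
Proof. intros. unfold clamp. rewrite Rmin_right, Rmax_right; lra. Qed.

Lemma clamp_contraction s t : Rabs (clamp s - clamp t) <= Rabs (s - t).
Proof.
  pose proof (Rle_abs (s - t)). pose proof (Rle_abs (- (s - t))). rewrite Rabs_Ropp in H0.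
  apply Rabs_le. unfold clamp, Rmax, Rmin.
  destruct (Rle_dec 1 s), (Rle_dec 1 t);
  repeat match goal with |- context [Rle_dec ?a ?b] => destruct (Rle_dec a b) end; lra.
Qed.

Section QuasihyperbolicUpperBound.
Variables (G : pt -> Prop) (g : R -> pt) (L k : R).
Hypotheses (HL : 0 <= L) (Hk : 0 < k) (Hbd : exists b, boundary G b).
Hypothesis Hlip : lipon g L 0 1.
Hypothesis Hfar : forall t, 0 <= t <= 1 -> G (g t) /\ k <= delta G (g t).

Lemma inv_delta_clamp_rlip : rlip (fun t => / delta G (g (clamp t))) (L / (k * k)).
Proof.
  intros s t.
  assert (Hd : forall t, k <= delta G (g (clamp t))) by (intros; apply Hfar, clamp_range).
  pose proof (Hd s). pose proof (Hd t).
  set (a := delta G (g (clamp s))) in *. set (b := delta G (g (clamp t))) in *.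
  replace (/ a - / b) with ((b - a) / (a * b)) by (field; lra).
  rewrite Rabs_div, (Rabs_right (a * b)) by nra.
  assert (Rabs (b - a) <= L * Rabs (s - t)).
  { rewrite Rabs_minus_sym. eapply Rle_trans; [apply delta_lipschitz; auto|].
    eapply Rle_trans; [apply Hlip; apply clamp_range|].
    apply Rmult_le_compat_l; auto. apply clamp_contraction. }
  unfold Rdiv. apply Rle_trans with (Rabs (b - a) * / (k * k)).
  - apply Rmult_le_compat_l; [apply Rabs_pos|]. apply Rinv_le_contravar; nra.
  - replace (L * / (k * k) * Rabs (s - t)) with (L * Rabs (s - t) * / (k * k)) by ring.
    apply Rmult_le_compat_r; [|lra]. apply Rlt_le, Rinv_0_lt_compat. nra.
Qed.

Lemma qh_metric_le_const_speed x y :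
  g 0 = x -> g 1 = y -> (forall t, 0 <= t <= 1 -> arclen g 0 t = Finite (L * t)) ->
  Rbar_le (qh_metric G x y) (Finite (L / k)).
Proof.
  intros Hg0 Hg1 Ha.
  set (h := fun t => / delta G (g (clamp t))).
  assert (HM : 0 <= L / (k * k)) by (apply Rdiv_le_0_compat; nra).
  assert (Hint : is_line_int (fun z => / delta G z) g (L * RInt h 0 1)).
  { apply (is_line_int_const_speed h (L / (k * k))); auto.
    - apply inv_delta_clamp_rlip.
    - intros t Ht. unfold h. rewrite clamp_id; auto.
    - intros t Ht. unfold arcfun. rewrite Ha; auto. }
  assert (Hbound : L * RInt h 0 1 <= L / k).
  { assert (Rabs (RInt h 0 1) <= (1 - 0) * / k).
    { apply abs_RInt_le_const; [lra|eapply rlip_ex_RInt; eauto using inv_delta_clamp_rlip|].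
      intros t Ht. unfold h. pose proof (Hfar (clamp t) (clamp_range t)) as [_ Hdt].
      rewrite Rabs_right by (apply Rle_ge, Rlt_le, Rinv_0_lt_compat; lra).
      apply Rinv_le_contravar; lra. }
    pose proof (Rle_abs (RInt h 0 1)). apply Rmult_le_compat_l; auto. lra. }
  apply Rbar_le_trans with (Finite (L * RInt h 0 1)); [|exact Hbound].
  apply (Glb_Rbar_correct _). exists g. split; [|split].
  - split; [exact (lipon_cont01 g L HL Hlip)|]. repeat split; auto. intros t Ht; apply Hfar, Ht.
  - unfold rectifiable. rewrite (Ha 1) by lra. reflexivity.
  - exact Hint.
Qed.

End QuasihyperbolicUpperBound.

Definition broken_line (tau : R) (x c y : pt) (t : R) : pt :=
  if Rle_dec t tau then lerp x c (t / tau) else lerp c y ((t - tau) / (1 - tau)).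

Section BrokenLine.
Variables (tau L : R) (x c y : pt).
Hypotheses (Htau : 0 < tau < 1) (HL : 0 <= L).
Hypotheses (Hxc : dist2 x c = tau * L) (Hcy : dist2 c y = (1 - tau) * L).

Let bl := broken_line tau x c y.

Lemma broken_line_first t : t <= tau -> bl t = lerp x c (t / tau).
Proof. intros; unfold bl, broken_line; destruct (Rle_dec t tau); [reflexivity|lra]. Qed.

Lemma broken_line_second t : tau <= t -> bl t = lerp c y ((t - tau) / (1 - tau)).
Proof.
  intros; unfold bl, broken_line; destruct (Rle_dec t tau); [|reflexivity].
  replace t with tau by lra. replace (tau / tau) with 1 by (field; lra).
  replace ((tau - tau) / (1 - tau)) with 0 by (field; lra). rewrite lerp1, lerp0. reflexivity.
Qed.

Lemma broken_line_start : bl 0 = x.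
Proof. rewrite broken_line_first by lra. replace (0 / tau) with 0 by (field; lra). apply lerp0. Qed.

Lemma broken_line_end : bl 1 = y.
Proof.
  rewrite broken_line_second by lra. replace ((1 - tau) / (1 - tau)) with 1 by (field; lra).
  apply lerp1.
Qed.

Lemma broken_line_lipon : lipon bl L 0 1.
Proof.
  apply lipon_glue with tau; [lra| |].
  - intros s t Hs Ht. rewrite !broken_line_first by lra. rewrite dist2_lerp, Hxc.
    replace (s / tau - t / tau) with ((s - t) / tau) by (field; lra).
    rewrite Rabs_div, (Rabs_right tau) by lra. right. field. lra.
  - intros s t Hs Ht. rewrite !broken_line_second by lra. rewrite dist2_lerp, Hcy.
    replace ((s - tau) / (1 - tau) - (t - tau) / (1 - tau)) with ((s - t) / (1 - tau))
      by (field; lra).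
    rewrite Rabs_div, (Rabs_right (1 - tau)) by lra. right. field. lra.
Qed.

(* The length of [bl] on [0, t] is attained by the partition through the corner. *)
Lemma broken_line_arclen t : 0 <= t <= 1 -> arclen bl 0 t = Finite (L * t).
Proof.
  intros Ht. apply arclen_const_speed; auto; [apply broken_line_lipon|].
  destruct (Req_dec t 0) as [->|Ht0].
  { exists O, (fun _ => 0). split; [repeat split; intros; lia|]. simpl; ring. }
  destruct (Rle_dec t tau).
  - exists 1%nat, (fun i => match i with O => 0 | _ => t end).
    split; [repeat split; intros [|i] Hi; simpl; lra || lia|].
    simpl. rewrite !broken_line_first by lra. rewrite dist2_lerp, Hxc.
    replace (0 / tau - t / tau) with (- (t / tau)) by (field; lra).
    rewrite Rabs_Ropp, Rabs_right by (apply Rle_ge, Rdiv_le_0_compat; lra).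
    field; lra.
  - exists 2%nat, (fun i => match i with O => 0 | 1%nat => tau | _ => t end).
    split; [repeat split; intros [|[|i]] Hi; simpl; lra || lia|].
    simpl. rewrite !broken_line_first by lra. rewrite (broken_line_second t) by lra.
    replace (tau / tau) with 1 by (field; lra). replace (0 / tau) with 0 by (field; lra).
    rewrite lerp0, lerp1, Hxc, dist2_lerp_r by (apply Rdiv_le_0_compat; lra).
    rewrite Hcy. field. lra.
Qed.

Lemma broken_line_on_segments t : 0 <= t <= 1 ->
  (exists l, 0 <= l <= 1 /\ bl t = lerp x c l) \/
  (exists l, 0 <= l <= 1 /\ bl t = lerp c y l).
Proof.
  intros Ht. destruct (Rle_dec t tau).
  - left. exists (t / tau). rewrite broken_line_first by lra. split; [|reflexivity].
    split; [apply Rdiv_le_0_compat; lra|]. apply Rmult_le_reg_r with tau; [lra|].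
    field_simplify; lra.
  - right. exists ((t - tau) / (1 - tau)). rewrite broken_line_second by lra. split; [|reflexivity].
    split; [apply Rdiv_le_0_compat; lra|]. apply Rmult_le_reg_r with (1 - tau); [lra|].
    field_simplify; lra.
Qed.

End BrokenLine.

Section QuasihyperbolicPolygonal.
Variables (G : pt -> Prop) (k : R).
Hypotheses (Hk : 0 < k) (Hbd : exists b, boundary G b).

Definition segment_far (x y : pt) :=
  forall l, 0 <= l <= 1 -> G (lerp x y l) /\ k <= delta G (lerp x y l).

Lemma qh_metric_le_broken_line x c y tau L : 0 < tau < 1 -> 0 <= L ->
  dist2 x c = tau * L -> dist2 c y = (1 - tau) * L ->
  segment_far x c -> segment_far c y ->
  Rbar_le (qh_metric G x y) (Finite (L / k)).
Proof.
  intros Htau HL Hxc Hcy H1 H2.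
  apply (qh_metric_le_const_speed G (broken_line tau x c y)); auto.
  - apply broken_line_lipon; auto.
  - intros t Ht. destruct (broken_line_on_segments tau x c y Htau t Ht) as [[l [Hl ->]]|[l [Hl ->]]];
      auto.
  - apply broken_line_start; auto.
  - apply broken_line_end; auto.
  - intros t Ht. apply broken_line_arclen; auto.
Qed.

Lemma qh_metric_le_segment x y : segment_far x y ->
  Rbar_le (qh_metric G x y) (Finite (dist2 x y / k)).
Proof.
  intros H. apply qh_metric_le_broken_line with (c := lerp x y (1/2)) (tau := 1/2).
  - lra.
  - apply dist2_nonneg.
  - rewrite dist2_lerp_r by lra. reflexivity.
  - rewrite dist2_lerp_l by lra. field.
  - intros l Hl. rewrite lerp_lerp_mid_l. apply H. lra.
  - intros l Hl. rewrite lerp_lerp_mid_r. apply H. lra.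
Qed.

End QuasihyperbolicPolygonal.

(** * Lower bounds for the quasihyperbolic metric *)

Definition polygonal_lengths (g : R -> pt) (t : R) := fun v => exists n p,
  partition 0 t n p /\ v = rsum (fun i => dist2 (g (p i)) (g (p (S i)))) n.

Lemma polygonal_lengths_extend g a b v : a < b ->
  polygonal_lengths g a v -> polygonal_lengths g b (v + dist2 (g a) (g b)).
Proof.
  intros Hab [n [p [[H0 [Hn Hinc]] ->]]].
  exists (S n), (fun i => if le_lt_dec i n then p i else b). split; [split; [|split]|].
  - destruct (le_lt_dec 0 n); [auto|lia].
  - destruct (le_lt_dec (S n) n); [lia|auto].
  - intros i Hi. destruct (le_lt_dec i n); [|lia]. destruct (le_lt_dec (S i) n).
    + apply Hinc; lia.
    + replace i with n by lia. lra.
  - rewrite rsum_S. cbv beta.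
    destruct (le_lt_dec n n); [|lia]. destruct (le_lt_dec (S n) n); [lia|].
    rewrite Hn. f_equal. apply rsum_ext. intros i Hi.
    destruct (le_lt_dec i n); [|lia]. destruct (le_lt_dec (S i) n); [reflexivity|lia].
Qed.

Lemma polygonal_lengths_nonempty g t : 0 <= t -> exists v, polygonal_lengths g t v.
Proof.
  intros Ht. destruct (Req_dec t 0) as [->|Ht0].
  - exists 0, O, (fun _ => 0). split; [repeat split; intros; lia|reflexivity].
  - exists (dist2 (g 0) (g t)), 1%nat, (fun i => match i with O => 0 | _ => t end).
    split; [repeat split; intros [|i] Hi; simpl; lra || lia|]. simpl. ring.
Qed.

Lemma polygonal_lengths_bounded g t : rectifiable g -> 0 <= t <= 1 ->
  forall v, polygonal_lengths g t v -> v <= real (arclen g 0 1).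
Proof.
  intros Hr Ht v Hv.
  assert (H1 : forall w, polygonal_lengths g 1 w -> w <= real (arclen g 0 1)).
  { intros w Hw. pose proof (proj1 (Lub_Rbar_correct (polygonal_lengths g 1)) w Hw) as Hub.
    unfold rectifiable, is_finite, arclen in *. fold (polygonal_lengths g 1) in *.
    rewrite <- Hr in Hub. exact Hub. }
  destruct (Req_dec t 1) as [->|Ht1]; auto.
  pose proof (H1 _ (polygonal_lengths_extend g t 1 v ltac:(lra) Hv)).
  pose proof (dist2_nonneg (g t) (g 1)). lra.
Qed.

Lemma arcfun_superadditive g a b : rectifiable g -> 0 <= a -> a < b -> b <= 1 ->
  arcfun g a + dist2 (g a) (g b) <= arcfun g b.
Proof.
  intros Hr Ha Hab Hb.
  destruct (Lub_Rbar_bounded_spec (polygonal_lengths g b) (real (arclen g 0 1)))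
    as [_ [Hubb _]]; [apply polygonal_lengths_nonempty; lra|apply polygonal_lengths_bounded; auto; lra|].
  destruct (Lub_Rbar_bounded_spec (polygonal_lengths g a) (real (arclen g 0 1)))
    as [_ [_ Hlsta]]; [apply polygonal_lengths_nonempty; lra|apply polygonal_lengths_bounded; auto; lra|].
  enough (real (Lub_Rbar (polygonal_lengths g a))
          <= real (Lub_Rbar (polygonal_lengths g b)) - dist2 (g a) (g b)) 
    by (unfold arcfun, arclen; fold (polygonal_lengths g a) (polygonal_lengths g b); lra).
  apply Hlsta. intros v Hv. pose proof (Hubb _ (polygonal_lengths_extend g a b v Hab Hv)). lra.
Qed.

Lemma ln_increment_le a r r' d : 0 < a -> 0 <= r -> 0 <= r' -> 0 <= d -> r' <= r + d ->
  ln (a + r') - ln (a + r) <= d / (a + r).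
Proof.
  intros Ha Hr Hr' Hd0 Hd.
  destruct (Rle_lt_dec r' r).
  - assert (ln (a + r') <= ln (a + r)) by (apply ln_le; lra).
    assert (0 <= d / (a + r)) by (apply Rdiv_le_0_compat; lra). lra.
  - rewrite <- ln_div by lra.
    replace ((a + r') / (a + r)) with (1 + (r' - r) / (a + r)) by (field; lra).
    apply Rle_trans with (ln (exp ((r' - r) / (a + r)))).
    + apply ln_le; [|apply exp_ineq1_le].
      apply Rplus_lt_le_0_compat; [lra|]. apply Rdiv_le_0_compat; lra.
    + rewrite ln_exp. apply Rmult_le_compat_r; [apply Rlt_le, Rinv_0_lt_compat|]; lra.
Qed.

Lemma uniform_partition_through t0 N : 0 < t0 < 1 -> (0 < N)%nat ->
  exists p, partition 0 1 (N + N) p /\ p N = t0 /\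
    forall i, (i < N + N)%nat -> p (S i) - p i <= / INR N.
Proof.
  intros Ht0 HN. pose proof (lt_0_INR N HN) as HNr.
  pose proof (Rinv_0_lt_compat _ HNr) as HinvN.
  set (p := fun i => if le_lt_dec i N then t0 * INR i / INR N
                     else t0 + (1 - t0) * (INR i - INR N) / INR N).
  assert (Hstep : forall i, (i < N + N)%nat -> 0 < p (S i) - p i <= / INR N).
  { intros i Hi. unfold p. rewrite S_INR.
    destruct (le_lt_dec (S i) N), (le_lt_dec i N); try lia.
    - replace (t0 * (INR i + 1) / INR N - t0 * INR i / INR N) with (t0 * / INR N) by (field; lra).
      split; nra.
    - replace i with N by lia.
      replace (t0 + (1 - t0) * (INR N + 1 - INR N) / INR N - t0 * INR N / INR N)
        with ((1 - t0) * / INR N) by (field; lra).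
      split; nra.
    - replace (t0 + (1 - t0) * (INR i + 1 - INR N) / INR N
               - (t0 + (1 - t0) * (INR i - INR N) / INR N))
        with ((1 - t0) * / INR N) by (field; lra).
      split; nra. }
  exists p. split; [split; [|split]|split].
  - unfold p. destruct (le_lt_dec 0 N); [|lia]. simpl. field. lra.
  - unfold p. destruct (le_lt_dec (N + N) N); [lia|]. rewrite plus_INR. field. lra.
  - intros i Hi. pose proof (Hstep i Hi). lra.
  - unfold p. destruct (le_lt_dec N N); [|lia]. field. lra.
  - intros i Hi. apply Hstep, Hi.
Qed.

Section LogLowerBound.
Variables (w : pt -> R) (g : R -> pt) (x : pt) (a : R).
Hypotheses (Hr : rectifiable g) (Ha : 0 < a) (Hg0 : g 0 = x).
Hypothesis Hw : forall t, 0 <= t <= 1 -> 0 < w (g t) /\ / (a + dist2 (g t) x) <= w (g t).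

(* Each term of a left Riemann sum dominates the increment of [ln (a + |g - x|)], since
   the arc length increment dominates the chord. *)
Lemma left_riemann_sum_ge_log n N p : partition 0 1 n p -> (N <= n)%nat ->
  ln (a + dist2 (g (p N)) x) - ln a
  <= rsum (fun i => w (g (p i)) * (arcfun g (p (S i)) - arcfun g (p i))) n.
Proof.
  intros Hp HNn. pose proof (partition_range _ _ _ _ Hp) as Hrng.
  set (f := fun i => w (g (p i)) * (arcfun g (p (S i)) - arcfun g (p i))).
  set (q := fun i => ln (a + dist2 (g (p i)) x)).
  assert (Hf : forall i, (i < n)%nat -> 0 <= f i /\ q (S i) - q i <= f i).
  { intros i Hi. pose proof (Hrng i ltac:(lia)). pose proof (Hrng (S i) ltac:(lia)).
    pose proof (proj2 (proj2 Hp) i Hi).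
    pose proof (arcfun_superadditive g (p i) (p (S i)) Hr ltac:(lra) ltac:(lra) ltac:(lra)).
    destruct (Hw (p i) ltac:(lra)) as [Hwp Hwl].
    pose proof (dist2_nonneg (g (p i)) (g (p (S i)))). pose proof (dist2_nonneg (g (p i)) x).
    split; [apply Rmult_le_pos; lra|].
    eapply Rle_trans; [apply (ln_increment_le a _ _ (dist2 (g (p i)) (g (p (S i)))))|];
      try apply dist2_nonneg; auto.
    - pose proof (dist2_triangle (g (p (S i))) (g (p i)) x) as Htri.
      rewrite (dist2_sym (g (p (S i))) (g (p i))) in Htri. lra.
    - unfold f, Rdiv. rewrite Rmult_comm.
      apply Rle_trans with (w (g (p i)) * dist2 (g (p i)) (g (p (S i)))).
      + apply Rmult_le_compat_r; auto.
      + apply Rmult_le_compat_l; lra. }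
  apply Rle_trans with (rsum f N); [|apply rsum_le_nonneg_tail; [lia|intros i Hi; apply Hf; lia]].
  replace (ln (a + dist2 (g (p N)) x) - ln a) with (rsum (fun i => q (S i) - q i) N).
  - apply rsum_le. intros i Hi. apply Hf. lia.
  - rewrite rsum_telescope. unfold q. rewrite (proj1 Hp), Hg0, dist2_refl, Rplus_0_r. reflexivity.
Qed.

Lemma is_line_int_ge_log I t0 : is_line_int w g I -> 0 < t0 < 1 ->
  ln (a + dist2 (g t0) x) - ln a <= I.
Proof.
  intros Hint Ht0. apply Rnot_lt_le. intros Hlt.
  set (eps := ln (a + dist2 (g t0) x) - ln a - I).
  destruct (Hint eps ltac:(unfold eps; lra)) as [eta [Heta Hconv]].
  destruct (INR_archimed eta 1 Heta) as [N HN].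
  assert (HN0 : (0 < N)%nat) by (destruct N; [simpl in HN; lra|lia]).
  pose proof (lt_0_INR N HN0) as HNr.
  assert (Hinv : / INR N < eta).
  { apply Rmult_lt_reg_r with (INR N); [lra|]. rewrite Rinv_l by lra. lra. }
  destruct (uniform_partition_through t0 N Ht0 HN0) as [p [Hp [HpN Hmesh]]].
  assert (Hc := Hconv (N + N)%nat p p Hp).
  assert (Hsum := left_riemann_sum_ge_log (N + N) N p Hp ltac:(lia)). rewrite HpN in Hsum.
  enough (Rabs (rsum (fun i => w (g (p i)) * (arcfun g (p (S i)) - arcfun g (p i))) (N + N) - I)
          < eps) by (apply Rabs_lt_between in H; unfold eps in *; lra).
  apply Hc.
  - intros i Hi. pose proof (Hmesh i Hi). lra.
  - intros i Hi. pose proof (proj2 (proj2 Hp) i Hi). lra.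
Qed.

End LogLowerBound.

Lemma qh_metric_ge G x y L :
  (forall g v, path_in G x y g -> rectifiable g -> is_line_int (fun z => / delta G z) g v -> L <= v) ->
  Rbar_le (Finite L) (qh_metric G x y).
Proof.
  intros H. apply (Glb_Rbar_correct _). intros v [g [Hp [Hr Hi]]]. exact (H g v Hp Hr Hi).
Qed.

Section PathSeparation.
Variables (G U V : pt -> Prop) (g : R -> pt).
Hypotheses (Hc : cont01 g) (HG : forall t, 0 <= t <= 1 -> G (g t)).
Hypotheses (HU : is_open U) (HV : is_open V).
Hypotheses (Hcov : forall x, G x -> U x \/ V x) (Hdis : forall x, G x -> U x -> V x -> False).
Hypotheses (H0 : U (g 0)) (H1 : V (g 1)).

Let stays_in_U t := 0 <= t <= 1 /\ forall s, 0 <= s <= t -> U (g s).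

(* [T] is the first time the path leaves [U]; it can lie neither in [U] nor in [V]. *)
Variable T : R.
Hypothesis HT : is_lub stays_in_U T.

Lemma exit_time_range : 0 <= T <= 1.
Proof.
  destruct HT as [Hub Hlst]. split.
  - apply Hub. split; [lra|]. intros s Hs. replace s with 0 by lra. exact H0.
  - apply Hlst. intros t [Ht _]. lra.
Qed.

Lemma before_exit_time s : 0 <= s < T -> U (g s).
Proof.
  intros Hs. destruct HT as [_ Hlst].
  destruct (classic (exists t, stays_in_U t /\ s <= t)) as [[t [[_ Ht] Hst]]|Hn].
  - apply Ht. lra.
  - exfalso. enough (T <= s) by lra. apply Hlst. intros t Ht.
    apply Rnot_lt_le. intros Hst. apply Hn. exists t. split; [exact Ht|lra].
Qed.

Lemma exit_time_not_in_U : ~ U (g T).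
Proof.
  intros HUT. pose proof exit_time_range.
  destruct (HU _ HUT) as [r [Hr Hball]].
  destruct (Hc T ltac:(lra) r Hr) as [eta [Heta Hcont]].
  assert (Hnear : forall s, 0 <= s <= 1 -> Rabs (s - T) < eta -> U (g s)).
  { intros s Hs Hst. apply Hball. rewrite dist2_sym. apply Hcont; auto. }
  destruct (Req_dec T 1) as [HT1|HT1].
  - apply (Hdis (g 1)); auto; [apply HG; lra|]. apply Hnear; [lra|].
    rewrite HT1, Rminus_diag, Rabs_R0; lra.
  - set (T' := Rmin 1 (T + eta / 2)).
    assert (T' <= 1) by apply Rmin_l. assert (T' <= T + eta / 2) by apply Rmin_r.
    assert (T < T') by (apply Rmin_glb_lt; lra).
    enough (T' <= T) by lra. apply (proj1 HT). split; [lra|]. intros s Hs.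
    destruct (Rlt_le_dec s T); [apply before_exit_time; lra|].
    apply Hnear; [lra|]. rewrite Rabs_right; lra.
Qed.

Lemma exit_time_not_in_V : ~ V (g T).
Proof.
  intros HVT. pose proof exit_time_range.
  assert (HT0 : 0 < T).
  { destruct (Req_dec T 0) as [E|E]; [|lra]. rewrite E in HVT.
    exfalso. apply (Hdis (g 0)); auto. apply HG; lra. }
  destruct (HV _ HVT) as [r [Hr Hball]].
  destruct (Hc T ltac:(lra) r Hr) as [eta [Heta Hcont]].
  set (s := Rmax 0 (T - eta / 2)).
  assert (0 <= s) by apply Rmax_l. assert (T - eta / 2 <= s) by apply Rmax_r.
  assert (s < T) by (apply Rmax_lub_lt; lra).
  apply (Hdis (g s)); [apply HG; lra|apply before_exit_time; lra|].
  apply Hball. rewrite dist2_sym. apply Hcont; [lra|]. rewrite Rabs_left; lra.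
Qed.

End PathSeparation.

Lemma path_not_separated (G U V : pt -> Prop) g : cont01 g -> (forall t, 0 <= t <= 1 -> G (g t)) ->
  is_open U -> is_open V -> (forall x, G x -> U x \/ V x) ->
  (forall x, G x -> U x -> V x -> False) -> U (g 0) -> V (g 1) -> False.
Proof.
  intros Hc HG HU HV Hcov Hdis H0 H1.
  destruct (completeness (fun t => 0 <= t <= 1 /\ forall s, 0 <= s <= t -> U (g s)))
    as [T HT].
  - exists 1. intros t [Ht _]. lra.
  - exists 0. split; [lra|]. intros s Hs. replace s with 0 by lra. exact H0.
  - pose proof (exit_time_range U g H0 T HT).
    destruct (Hcov (g T) (HG T ltac:(lra))) as [HUT|HVT].
    + exact (exit_time_not_in_U G U V g Hc HG HU Hdis H0 H1 T HT HUT).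
    + exact (exit_time_not_in_V G U V g Hc HG HV Hdis H0 T HT HVT).
Qed.

(** * The cusp *)

Definition cusp (z : pt) : Prop := 0 < fst z < 1 /\ Rabs (snd z) < fst z ^ 2.
Definition closed_cusp (z : pt) : Prop := 0 <= fst z <= 1 /\ Rabs (snd z) <= fst z ^ 2.
Definition cusp_rim (z : pt) : Prop :=
  (exists u, 0 <= u <= 1 /\ z = (u, u ^ 2)) \/
  (exists u, 0 <= u <= 1 /\ z = (u, - u ^ 2)) \/
  (exists v, -1 <= v <= 1 /\ z = (1, v)).
Definition cusp_center : pt := (1/2, 0).

(* Up to a factor 3, the distance to the boundary of the cusp. *)
Definition cusp_margin (z : pt) : R := Rmin (fst z ^ 2 - Rabs (snd z)) (1 - fst z).

Lemma cusp_margin_pos z : cusp z -> 0 < cusp_margin z.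
Proof. intros [[H1 H2] H3]. apply Rmin_glb_lt; lra. Qed.

Lemma cusp_center_in : cusp cusp_center.
Proof. unfold cusp, cusp_center; cbn [fst snd]. rewrite Rabs_R0. lra. Qed.

Lemma cusp_ball z y : cusp z -> dist2 z y < cusp_margin z / 3 -> cusp y.
Proof.
  intros Hz Hd. pose proof (Rmin_l (fst z ^ 2 - Rabs (snd z)) (1 - fst z)) as HP1.
  pose proof (Rmin_r (fst z ^ 2 - Rabs (snd z)) (1 - fst z)) as HP2.
  pose proof (cusp_margin_pos z Hz) as HP0.
  destruct (dist2_lt_coord _ _ _ Hd) as [Ha Hb]. unfold cusp_margin in *.
  destruct z as [u v], y as [u' v']; unfold cusp in *; cbn [fst snd] in *.
  destruct Hz as [[H1 H2] H3].
  set (r := Rmin (u ^ 2 - Rabs v) (1 - u)) in *. clearbody r. clear Hd.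
  assert (Hv' : Rabs v' <= Rabs v + Rabs (v - v')).
  { replace v' with (v - (v - v')) at 1 by ring.
    eapply Rle_trans; [apply Rabs_triang|]. rewrite Rabs_Ropp. lra. }
  pose proof (proj1 (Rabs_lt_between _ _) Ha). pose proof (Rabs_pos v). pose proof (Rabs_pos v').
  assert (u ^ 2 < u) by nra.
  split; [split|]; [lra|lra|].
  assert (u' ^ 2 >= u ^ 2 - 2 * Rabs (u - u')).
  { destruct (Rle_lt_dec u u'); [rewrite Rabs_left1 by lra | rewrite Rabs_right by lra]; nra. }
  lra.
Qed.

Lemma cusp_open : is_open cusp.
Proof.
  intros z Hz. exists (cusp_margin z / 3). split.
  - pose proof (cusp_margin_pos z Hz); lra.
  - intros y Hy. eapply cusp_ball; eauto.
Qed.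

Lemma closure_cusp_closed z : closure cusp z -> closed_cusp z.
Proof.
  intros Hc. destruct z as [u v]. unfold closed_cusp; cbn [fst snd].
  destruct (Rlt_le_dec u 0) as [Hu|Hu].
  { exfalso. destruct (Hc (-u)) as [[u' v'] [[[H1 _] _] Hd]]; [lra|].
    pose proof (dist2_fst (u, v) (u', v')). cbn [fst snd] in *. rewrite Rabs_left in H; lra. }
  destruct (Rlt_le_dec 1 u) as [Hu'|Hu'].
  { exfalso. destruct (Hc (u - 1)) as [[u' v'] [[[_ H1] _] Hd]]; [lra|].
    pose proof (dist2_fst (u, v) (u', v')). cbn [fst snd] in *. rewrite Rabs_right in H; lra. }
  split; [lra|]. apply Rnot_lt_le. intros H.
  set (r := Rmin 1 ((Rabs v - u ^ 2) / 4)).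
  assert (Hr : 0 < r) by (apply Rmin_glb_lt; lra).
  assert (Hr1 : r <= 1) by apply Rmin_l.
  assert (Hr2 : r <= (Rabs v - u ^ 2) / 4) by apply Rmin_r.
  destruct (Hc r Hr) as [[u' v'] [[_ H3] Hd]].
  destruct (dist2_lt_coord _ _ _ Hd) as [Ha Hb]. cbn [fst snd] in *.
  assert (Rabs v <= Rabs v' + Rabs (v - v')).
  { replace v with (v' + (v - v')) at 1 by ring. apply Rabs_triang. }
  assert (u' ^ 2 <= u ^ 2 + 2 * Rabs (u - u') + Rabs (u - u') ^ 2).
  { destruct (Rle_lt_dec u u'); [rewrite Rabs_left1 by lra | rewrite Rabs_right by lra]; nra. }
  pose proof (Rabs_pos (u - u')).
  assert (Rabs (u - u') ^ 2 <= r) by nra.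
  lra.
Qed.

Lemma cusp_in_closure z : cusp z -> closure cusp z.
Proof. intros Hz r Hr. exists z. rewrite dist2_refl. auto. Qed.

(* Pushing a rim point slightly towards the centre enters the cusp. *)
Lemma cusp_rim_in_closure z : cusp_rim z -> closure cusp z.
Proof.
  intros HC r Hr.
  set (e := Rmin (1/2) (r / 4)).
  assert (He : 0 < e) by (apply Rmin_glb_lt; lra).
  assert (He1 : e <= 1/2) by apply Rmin_l.
  assert (He2 : e <= r / 4) by apply Rmin_r.
  exists (lerp z cusp_center e). split.
  - clearbody e.
    destruct HC as [[u [Hu ->]]|[[u [Hu ->]]|[v [Hv ->]]]];
      unfold cusp, lerp, cusp_center; cbn [fst snd].
    + assert (0 <= (1 - e) * u) by (apply Rmult_le_pos; lra).
      assert (0 <= e * (1 - e) * u * (1 - u)) by (repeat apply Rmult_le_pos; lra).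
      split; [split|]; [nra|nra|].
      replace (u ^ 2 + e * (0 - u ^ 2)) with ((1 - e) * u ^ 2) by ring.
      rewrite Rabs_right by (apply Rle_ge, Rmult_le_pos; [lra|apply pow2_ge_0]). nra.
    + assert (0 <= (1 - e) * u) by (apply Rmult_le_pos; lra).
      assert (0 <= e * (1 - e) * u * (1 - u)) by (repeat apply Rmult_le_pos; lra).
      split; [split|]; [nra|nra|].
      replace (- u ^ 2 + e * (0 - - u ^ 2)) with (- ((1 - e) * u ^ 2)) by ring.
      rewrite Rabs_Ropp, Rabs_right by (apply Rle_ge, Rmult_le_pos; [lra|apply pow2_ge_0]). nra.
    + split; [split|]; [nra|nra|].
      replace (v + e * (0 - v)) with ((1 - e) * v) by ring.
      rewrite Rabs_mult, (Rabs_right (1 - e)) by lra.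
      assert (Rabs v <= 1) by (apply Rabs_le; lra).
      assert ((1 - e) * Rabs v <= 1 - e) by (apply Rmult_le_compat_l with (r := 1 - e) in H; lra).
      nra.
  - rewrite dist2_lerp_r by lra.
    assert (dist2 z cusp_center <= 2).
    { eapply Rle_trans; [apply dist2_le_l1|].
      destruct HC as [[u [Hu ->]]|[[u [Hu ->]]|[v [Hv ->]]]]; unfold cusp_center; cbn [fst snd];
        apply Rplus_le_compat; apply Rabs_le; nra. }
    pose proof (dist2_nonneg z cusp_center). nra.
Qed.

Lemma cusp_rim_not_interior z : cusp_rim z -> ~ Defs.interior cusp z.
Proof.
  intros HC [r [Hr Hi]].
  destruct HC as [[u [Hu ->]]|[[u [Hu ->]]|[v [Hv ->]]]].
  - destruct (Hi (u, u ^ 2 + r / 2)) as [_ H].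
    + rewrite dist2_vertical. replace (u ^ 2 - (u ^ 2 + r / 2)) with (- (r / 2)) by ring.
      rewrite Rabs_Ropp, Rabs_right; lra.
    + cbn [fst snd] in H. rewrite Rabs_right in H; nra.
  - destruct (Hi (u, - u ^ 2 - r / 2)) as [_ H].
    + rewrite dist2_vertical. replace (- u ^ 2 - (- u ^ 2 - r / 2)) with (r / 2) by ring.
      rewrite Rabs_right; lra.
    + cbn [fst snd] in H. rewrite Rabs_left1 in H; nra.
  - destruct (Hi (1 + r / 2, v)) as [[_ H] _].
    + rewrite dist2_horizontal. replace (1 - (1 + r / 2)) with (- (r / 2)) by ring.
      rewrite Rabs_Ropp, Rabs_right; lra.
    + cbn [fst snd] in H. lra.
Qed.

Lemma cusp_boundary z : boundary cusp z <-> cusp_rim z.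
Proof.
  split; [|intros HC; split; [apply cusp_rim_in_closure|apply cusp_rim_not_interior]; auto].
  intros [Hc Hni]. pose proof (closure_cusp_closed z Hc) as [Hu Hv].
  assert (Hout : ~ cusp z).
  { intros H. apply Hni. destruct (cusp_open z H) as [r Hr]. exists r; auto. }
  destruct z as [u v]; cbn [fst snd] in *.
  destruct (Req_dec u 0) as [->|H0].
  { left. exists 0. split; [lra|]. pose proof (Rabs_pos v).
    assert (Hv0 : Rabs v = 0) by nra. apply Rabs_eq_0 in Hv0. subst. f_equal. ring. }
  destruct (Req_dec u 1) as [->|H1].
  { right; right. exists v. split; [|reflexivity]. apply Rabs_le_between. lra. }
  assert (Hvu : Rabs v = u ^ 2).
  { destruct (Rle_lt_dec (u ^ 2) (Rabs v)); [lra|]. exfalso. apply Hout. split; cbn; lra. }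
  destruct (Rle_lt_dec 0 v).
  - left. exists u. split; [lra|]. rewrite Rabs_right in Hvu by lra. subst; reflexivity.
  - right; left. exists u. split; [lra|]. rewrite Rabs_left in Hvu by lra. f_equal. lra.
Qed.

Lemma cusp_boundary_nonempty : exists b, boundary cusp b.
Proof. exists (0, 0 ^ 2). apply cusp_boundary. left. exists 0. split; [lra|reflexivity]. Qed.

Lemma delta_cusp_ge z : cusp z -> cusp_margin z / 3 <= delta cusp z.
Proof.
  intros Hz. apply delta_ge_ball; [apply cusp_boundary_nonempty|]. intros y Hy.
  eapply cusp_ball; eauto.
Qed.

Lemma delta_cusp_le z : cusp z -> delta cusp z <= cusp_margin z.
Proof.
  intros Hz. pose proof Hz as [[H1 H2] H3]. destruct z as [u v]; cbn [fst snd] in *.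
  apply Rmin_glb; cbn [fst snd].
  - destruct (Rle_lt_dec 0 v).
    + eapply Rle_trans; [apply (delta_le_dist _ _ (u, u ^ 2))|].
      * apply cusp_boundary. left. exists u. split; [lra|reflexivity].
      * rewrite (Rabs_right v) in H3 |- * by lra.
        rewrite dist2_vertical, Rabs_left1 by lra. lra.
    + eapply Rle_trans; [apply (delta_le_dist _ _ (u, - u ^ 2))|].
      * apply cusp_boundary. right; left. exists u. split; [lra|reflexivity].
      * rewrite (Rabs_left v) in H3 |- * by lra.
        rewrite dist2_vertical, Rabs_right by lra. lra.
  - eapply Rle_trans; [apply (delta_le_dist _ _ (1, v))|].
    + apply cusp_boundary. right; right. exists v. split; [|reflexivity].
      apply Rabs_le_between. nra.
    + rewrite dist2_horizontal, Rabs_left1 by lra. lra.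
Qed.

Definition cusp_curve (t : R) : pt :=
  if Rle_dec t (1/3) then (3 * t, (3 * t) ^ 2)
  else if Rle_dec t (2/3) then (1, 3 - 6 * t)
  else (3 - 3 * t, - (3 - 3 * t) ^ 2).

Lemma cusp_curve_upper t : t <= 1/3 -> cusp_curve t = (3 * t, (3 * t) ^ 2).
Proof. intros; unfold cusp_curve; destruct (Rle_dec t (1/3)); [reflexivity|lra]. Qed.

Lemma cusp_curve_right t : 1/3 <= t <= 2/3 -> cusp_curve t = (1, 3 - 6 * t).
Proof.
  intros; unfold cusp_curve; destruct (Rle_dec t (1/3)).
  - replace t with (1/3) by lra. f_equal; field.
  - destruct (Rle_dec t (2/3)); [reflexivity|lra].
Qed.

Lemma cusp_curve_lower t : 2/3 <= t -> cusp_curve t = (3 - 3 * t, - (3 - 3 * t) ^ 2).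
Proof.
  intros; unfold cusp_curve; destruct (Rle_dec t (1/3)); [lra|].
  destruct (Rle_dec t (2/3)); [|reflexivity].
  replace t with (2/3) by lra. f_equal; field.
Qed.

Lemma Rabs_pow2_minus_pow2 a b : Rabs (a ^ 2 - b ^ 2) = Rabs (a + b) * Rabs (a - b).
Proof. rewrite <- Rabs_mult. f_equal. ring. Qed.

Lemma cusp_curve_lipon : lipon cusp_curve 9 0 1.
Proof.
  apply lipon_glue with (1/3); [lra| |].
  - intros s t Hs Ht. rewrite !cusp_curve_upper by lra.
    eapply Rle_trans; [apply dist2_le_l1|]. cbn [fst snd].
    rewrite Rabs_pow2_minus_pow2.
    replace (3 * s - 3 * t) with (3 * (s - t)) by ring.
    replace (3 * s + 3 * t) with (3 * (s + t)) by ring.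
    rewrite !Rabs_mult, (Rabs_right 3), (Rabs_right (s + t)) by lra.
    pose proof (Rabs_pos (s - t)). nra.
  - apply lipon_glue with (2/3); [lra| |].
    + intros s t Hs Ht. rewrite !cusp_curve_right by lra. rewrite dist2_vertical.
      replace (3 - 6 * s - (3 - 6 * t)) with (-6 * (s - t)) by ring.
      rewrite Rabs_mult, Rabs_left by lra. pose proof (Rabs_pos (s - t)). lra.
    + intros s t Hs Ht. rewrite !cusp_curve_lower by lra.
      eapply Rle_trans; [apply dist2_le_l1|]. cbn [fst snd].
      replace (- (3 - 3 * s) ^ 2 - - (3 - 3 * t) ^ 2)
        with (- ((3 - 3 * s) ^ 2 - (3 - 3 * t) ^ 2)) by ring.
      rewrite Rabs_Ropp, Rabs_pow2_minus_pow2.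
      replace (3 - 3 * s - (3 - 3 * t)) with (-3 * (s - t)) by ring.
      replace (3 - 3 * s + (3 - 3 * t)) with (3 * (2 - s - t)) by ring.
      rewrite !Rabs_mult, (Rabs_right 3), Rabs_left, (Rabs_right (2 - s - t)) by lra.
      pose proof (Rabs_pos (s - t)). nra.
Qed.

Lemma cusp_curve_injective_ordered s t : 0 <= s < 1 -> 0 <= t < 1 ->
  cusp_curve s = cusp_curve t -> s <= t -> s = t.
Proof.
  intros Hs Ht Heq Hst.
  destruct (Rle_dec t (1/3)).
  { rewrite !cusp_curve_upper in Heq by lra. injection Heq. lra. }
  destruct (Rle_dec t (2/3)).
  { rewrite (cusp_curve_right t) in Heq by lra.
    destruct (Rle_dec s (1/3)).
    - rewrite cusp_curve_upper in Heq by lra. injection Heq as E1 E2. nra.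
    - rewrite cusp_curve_right in Heq by lra. injection Heq. lra. }
  rewrite (cusp_curve_lower t) in Heq by lra.
  destruct (Rle_dec s (1/3)).
  - rewrite cusp_curve_upper in Heq by lra. injection Heq as E1 E2.
    pose proof (pow2_ge_0 (3 * s)). pose proof (pow2_ge_0 (3 - 3 * t)). nra.
  - destruct (Rle_dec s (2/3)).
    + rewrite cusp_curve_right in Heq by lra. injection Heq. lra.
    + rewrite cusp_curve_lower in Heq by lra. injection Heq. lra.
Qed.

Lemma cusp_curve_injective s t : 0 <= s < 1 -> 0 <= t < 1 -> cusp_curve s = cusp_curve t -> s = t.
Proof.
  intros Hs Ht Heq. destruct (Rle_dec s t); [apply cusp_curve_injective_ordered; auto|].
  symmetry. apply cusp_curve_injective_ordered; auto. lra.
Qed.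

Lemma cusp_curve_image z : (exists t, 0 <= t <= 1 /\ cusp_curve t = z) <-> cusp_rim z.
Proof.
  split.
  - intros [t [Ht <-]].
    destruct (Rle_dec t (1/3)).
    { rewrite cusp_curve_upper by lra. left. exists (3 * t). split; [lra|reflexivity]. }
    destruct (Rle_dec t (2/3)).
    { rewrite cusp_curve_right by lra. right; right. exists (3 - 6 * t). split; [lra|reflexivity]. }
    rewrite cusp_curve_lower by lra. right; left. exists (3 - 3 * t). split; [lra|reflexivity].
  - intros [[u [Hu ->]]|[[u [Hu ->]]|[v [Hv ->]]]].
    + exists (u / 3). split; [lra|]. rewrite cusp_curve_upper by lra. f_equal; field.
    + exists (1 - u / 3). split; [lra|]. rewrite cusp_curve_lower by lra. f_equal; field.
    + exists ((3 - v) / 6). split; [lra|]. rewrite cusp_curve_right by lra. f_equal; field.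
Qed.

Lemma cusp_curve_jordan : jordan_curve cusp_curve.
Proof.
  split; [|split].
  - eapply lipon_cont01; [|apply cusp_curve_lipon]. lra.
  - rewrite cusp_curve_upper, cusp_curve_lower by lra. f_equal; ring.
  - apply cusp_curve_injective.
Qed.

Lemma cusp_lerp_center x m l : cusp x -> 0 < m -> m <= cusp_margin x -> 0 <= l <= 1 ->
  cusp (lerp x cusp_center l) /\ m / 2 <= cusp_margin (lerp x cusp_center l).
Proof.
  intros Hx Hm HP Hl.
  pose proof (Rmin_l (fst x ^ 2 - Rabs (snd x)) (1 - fst x)) as HP1.
  pose proof (Rmin_r (fst x ^ 2 - Rabs (snd x)) (1 - fst x)) as HP2.
  destruct x as [u v]. destruct Hx as [[H1 H2] H3].
  unfold lerp, cusp_center, cusp_margin in *; cbn [fst snd] in *.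
  replace (v + l * (0 - v)) with ((1 - l) * v) by ring.
  rewrite Rabs_mult, (Rabs_right (1 - l)) by lra.
  pose proof (Rabs_pos v).
  assert (Hid : (u + l * (1 / 2 - u)) ^ 2 - (1 - l) * Rabs v
                = (1 - l) * (u ^ 2 - Rabs v) + l * (u * (1 - u)) + l ^ 2 * (1/2 - u) ^ 2) by field.
  assert (Hu1 : m / 2 <= u * (1 - u)).
  { destruct (Rle_lt_dec u (1/2)); [assert (u ^ 2 <= u) by nra|]; nra. }
  assert (Hf : m / 2 <= (u + l * (1 / 2 - u)) ^ 2 - (1 - l) * Rabs v).
  { rewrite Hid. assert (0 <= l ^ 2 * (1/2 - u) ^ 2) by (apply Rmult_le_pos; apply pow2_ge_0).
    assert (l * (m / 2) <= l * (u * (1 - u))) by (apply Rmult_le_compat_l; lra).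
    assert ((1 - l) * m <= (1 - l) * (u ^ 2 - Rabs v)) by (apply Rmult_le_compat_l; lra). nra. }
  assert (Hg : m <= 1 - (u + l * (1 / 2 - u))).
  { assert (m <= 1/2) by (destruct (Rle_lt_dec u (1/2)); nra).
    replace (1 - (u + l * (1 / 2 - u))) with ((1 - l) * (1 - u) + l * (1/2)) by field.
    assert ((1 - l) * m <= (1 - l) * (1 - u)) by (apply Rmult_le_compat_l; lra).
    assert (l * m <= l * (1/2)) by (apply Rmult_le_compat_l; lra). nra. }
  split; [|apply Rmin_glb; lra].
  unfold cusp; cbn [fst snd]. rewrite Rabs_mult, (Rabs_right (1 - l)) by lra.
  split; [split|]; [|lra|lra].
  assert (0 <= (1 - l) * u) by (apply Rmult_le_pos; lra). nra.
Qed.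

(* [(1 - l) u1^2 + l u2^2] exceeds [((1 - l) u1 + l u2)^2] by [l (1 - l) (u1 - u2)^2],
   which is at most [|x - y|^2 / 4]. *)
Lemma cusp_lerp_close x y m l : cusp x -> cusp y -> 0 < m ->
  m <= cusp_margin x -> m <= cusp_margin y -> dist2 x y ^ 2 <= 2 * m -> 0 <= l <= 1 ->
  cusp (lerp x y l) /\ m / 2 <= cusp_margin (lerp x y l).
Proof.
  intros Hx Hy Hm HPx HPy Hd Hl.
  pose proof (Rmin_l (fst x ^ 2 - Rabs (snd x)) (1 - fst x)) as HPx1.
  pose proof (Rmin_r (fst x ^ 2 - Rabs (snd x)) (1 - fst x)) as HPx2.
  pose proof (Rmin_l (fst y ^ 2 - Rabs (snd y)) (1 - fst y)) as HPy1.
  pose proof (Rmin_r (fst y ^ 2 - Rabs (snd y)) (1 - fst y)) as HPy2.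
  rewrite dist2_sq in Hd.
  destruct x as [u1 v1], y as [u2 v2]. destruct Hx as [[H1 H2] H3]. destruct Hy as [[H4 H5] H6].
  unfold lerp, cusp_margin in *; cbn [fst snd] in *.
  assert (Hv : Rabs (v1 + l * (v2 - v1)) <= (1 - l) * Rabs v1 + l * Rabs v2).
  { replace (v1 + l * (v2 - v1)) with ((1 - l) * v1 + l * v2) by ring.
    eapply Rle_trans; [apply Rabs_triang|].
    rewrite !Rabs_mult, (Rabs_right (1 - l)), (Rabs_right l) by lra. lra. }
  assert (Hid : (u1 + l * (u2 - u1)) ^ 2
                = (1 - l) * u1 ^ 2 + l * u2 ^ 2 - l * (1 - l) * (u1 - u2) ^ 2) by ring.
  assert (Hq : l * (1 - l) * (u1 - u2) ^ 2 <= m / 2).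
  { assert (l * (1 - l) <= 1/4) by (pose proof (pow2_ge_0 (2 * l - 1)); nra).
    assert ((u1 - u2) ^ 2 <= 2 * m) by (pose proof (pow2_ge_0 (v1 - v2)); lra).
    assert (0 <= l * (1 - l)) by nra. pose proof (pow2_ge_0 (u1 - u2)). nra. }
  assert (Hf : m / 2 <= (u1 + l * (u2 - u1)) ^ 2 - Rabs (v1 + l * (v2 - v1))).
  { rewrite Hid.
    assert ((1 - l) * m <= (1 - l) * (u1 ^ 2 - Rabs v1)) by (apply Rmult_le_compat_l; lra).
    assert (l * m <= l * (u2 ^ 2 - Rabs v2)) by (apply Rmult_le_compat_l; lra). nra. }
  assert (Hg : m <= 1 - (u1 + l * (u2 - u1))).
  { replace (1 - (u1 + l * (u2 - u1))) with ((1 - l) * (1 - u1) + l * (1 - u2)) by ring.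
    assert ((1 - l) * m <= (1 - l) * (1 - u1)) by (apply Rmult_le_compat_l; lra).
    assert (l * m <= l * (1 - u2)) by (apply Rmult_le_compat_l; lra). nra. }
  split; [|apply Rmin_glb; lra].
  unfold cusp; cbn [fst snd]. split; [split|]; [|lra|lra].
  replace (u1 + l * (u2 - u1)) with ((1 - l) * u1 + l * u2) by ring.
  assert (0 <= (1 - l) * u1) by (apply Rmult_le_pos; lra).
  assert (0 <= l * u2) by (apply Rmult_le_pos; lra).
  destruct (Req_dec l 0); [subst; lra|]. nra.
Qed.

Lemma cusp_connected : Defs.is_connected cusp.
Proof.
  intros [U [V [HU [HV [Hcov [Hdis [[x [Hx HUx]] [y [Hy HVy]]]]]]]]].
  destruct (Hcov cusp_center cusp_center_in) as [HUc|HVc].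
  - apply (path_not_separated cusp U V (lerp cusp_center y)); auto using lerp_cont01.
    + intros t Ht. rewrite lerp_sym.
      apply (cusp_lerp_center y (cusp_margin y)); auto using cusp_margin_pos; lra.
    + rewrite lerp0; auto.
    + rewrite lerp1; auto.
  - apply (path_not_separated cusp U V (lerp x cusp_center)); auto using lerp_cont01.
    + intros t Ht. apply (cusp_lerp_center x (cusp_margin x)); auto using cusp_margin_pos; lra.
    + rewrite lerp0; auto.
    + rewrite lerp1; auto.
Qed.

Lemma cusp_jordan_domain : jordan_domain cusp.
Proof.
  split.
  - split; [exists cusp_center; apply cusp_center_in|]. split; [apply cusp_open|apply cusp_connected].
  - exists cusp_curve. split; [apply cusp_curve_jordan|]. intros z.
    rewrite cusp_boundary, cusp_curve_image. tauto.
Qed.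

Lemma cusp_bounded : is_bounded cusp.
Proof.
  exists 2. intros [u v] [[H1 H2] H3]. cbn [fst snd] in *. unfold norm2; cbn [fst snd].
  rewrite <- (sqrt_pow2 2) by lra. apply sqrt_le_1_alt.
  apply Rabs_lt_between in H3. assert (u ^ 2 < 1) by nra. assert (v ^ 2 < 1) by nra. lra.
Qed.

(** * Uniformity of the cusp *)

Definition cusp_phi (t : R) : R := (3 * t + 1) ^ 2 - 1.

Lemma cusp_phi_homeo : homeo0 cusp_phi.
Proof.
  unfold cusp_phi. split; [|split; [|split]].
  - ring.
  - intros s t Hs Hst. nra.
  - intros t Ht eps Heps. exists (Rmin 1 (eps / (3 * (6 * t + 5)))). split.
    + apply Rmin_glb_lt; [lra|]. apply Rdiv_lt_0_compat; lra.
    + intros s Hs Hst.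
      assert (H1 : Rabs (s - t) < 1) by (eapply Rlt_le_trans; [exact Hst|apply Rmin_l]).
      assert (H2 : Rabs (s - t) < eps / (3 * (6 * t + 5)))
        by (eapply Rlt_le_trans; [exact Hst|apply Rmin_r]).
      replace ((3 * s + 1) ^ 2 - 1 - ((3 * t + 1) ^ 2 - 1))
        with (3 * (s - t) * (3 * (s - t) + 6 * t + 2)) by ring.
      rewrite !Rabs_mult, (Rabs_right 3) by lra.
      assert (Rabs (3 * (s - t) + 6 * t + 2) <= 6 * t + 5).
      { apply Rabs_le. apply Rabs_lt_between in H1. lra. }
      apply Rmult_lt_compat_l with (r := 3 * (6 * t + 5)) in H2; [|lra].
      replace (3 * (6 * t + 5) * (eps / (3 * (6 * t + 5)))) with eps in H2 by (field; lra).
      pose proof (Rabs_pos (s - t)). pose proof (Rabs_pos (3 * (s - t) + 6 * t + 2)). nra.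
  - intros y Hy. exists ((sqrt (1 + y) - 1) / 3). split.
    + assert (1 <= sqrt (1 + y)) by (rewrite <- sqrt_1 at 1; apply sqrt_le_1_alt; lra).
      apply Rdiv_le_0_compat; lra.
    + replace (3 * ((sqrt (1 + y) - 1) / 3) + 1) with (sqrt (1 + y)) by field.
      rewrite pow2_sqrt by lra. ring.
Qed.

Lemma cusp_segment_far x y m : 0 < m ->
  (forall l, 0 <= l <= 1 -> cusp (lerp x y l) /\ m / 2 <= cusp_margin (lerp x y l)) ->
  segment_far cusp (m / 6) x y.
Proof.
  intros Hm H l Hl. destruct (H l Hl) as [Hin HP]. split; [exact Hin|].
  pose proof (delta_cusp_ge _ Hin). lra.
Qed.

Lemma dist2_cusp_center_lt z : cusp z -> dist2 z cusp_center < 3/2.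
Proof.
  intros [[H1 H2] H3]. eapply Rle_lt_trans; [apply dist2_le_l1|].
  destruct z as [u v]; unfold cusp_center; cbn [fst snd] in *.
  apply Rabs_lt_between in H3. assert (u ^ 2 < 1) by nra.
  assert (Rabs (u - 1/2) < 1/2) by (apply Rabs_def1; lra).
  assert (Rabs (v - 0) < 1) by (apply Rabs_def1; lra). lra.
Qed.

Section CuspUniform.
Variables (x y : pt) (m : R).
Hypotheses (Hx : cusp x) (Hy : cusp y) (Hm : 0 < m).
Hypotheses (Hmx : m <= cusp_margin x) (Hmy : m <= cusp_margin y).

Lemma qh_cusp_close : dist2 x y ^ 2 <= 2 * m ->
  Rbar_le (qh_metric cusp x y) (Finite (dist2 x y / (m / 6))).
Proof.
  intros Hd. apply qh_metric_le_segment; [lra|apply cusp_boundary_nonempty|].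
  apply cusp_segment_far; auto. intros l Hl. apply cusp_lerp_close; auto.
Qed.

Lemma qh_cusp_via_center : Rbar_le (qh_metric cusp x y) (Finite (18 / m)).
Proof.
  assert (Hbd := cusp_boundary_nonempty).
  assert (Hk : 0 < m / 6) by lra.
  assert (Hfar_x : segment_far cusp (m / 6) x cusp_center).
  { apply cusp_segment_far; auto. intros l Hl. apply cusp_lerp_center; auto. }
  assert (Hfar_y : segment_far cusp (m / 6) cusp_center y).
  { apply cusp_segment_far; auto. intros l Hl. rewrite lerp_sym.
    apply cusp_lerp_center; auto. lra. }
  pose proof (dist2_cusp_center_lt x Hx). pose proof (dist2_cusp_center_lt y Hy).
  rewrite dist2_sym in H0.
  pose proof (dist2_nonneg x cusp_center). pose proof (dist2_nonneg cusp_center y).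
  set (d1 := dist2 x cusp_center) in *. set (d2 := dist2 cusp_center y) in *.
  assert (Hbound : forall L, 0 <= L <= 3 -> Rbar_le (Finite (L / (m / 6))) (Finite (18 / m))).
  { intros L HL. simpl. apply Rmult_le_reg_r with (m / 6); [lra|]. field_simplify; lra. }
  destruct (Req_dec d1 0) as [E1|E1].
  { replace x with cusp_center in * by (symmetry; apply dist2_eq_0; exact E1).
    eapply Rbar_le_trans; [apply qh_metric_le_segment; eauto|]. apply Hbound.
    split; [apply dist2_nonneg|unfold d2 in *; lra]. }
  destruct (Req_dec d2 0) as [E2|E2].
  { replace y with cusp_center in * by (apply dist2_eq_0; exact E2).
    eapply Rbar_le_trans; [apply qh_metric_le_segment; eauto|]. apply Hbound.
    split; [apply dist2_nonneg|unfold d1 in *; lra]. }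
  eapply Rbar_le_trans;
    [apply (qh_metric_le_broken_line cusp (m / 6) Hk Hbd x cusp_center y (d1 / (d1 + d2)) (d1 + d2))
    |apply Hbound; lra]; auto.
  - split; [apply Rdiv_lt_0_compat; lra|]. apply Rmult_lt_reg_r with (d1 + d2); [lra|].
    field_simplify; lra.
  - lra.
  - fold d1. field. lra.
  - fold d2. field. lra.
Qed.

End CuspUniform.

Lemma cusp_uniform : phi_uniform cusp cusp_phi.
Proof.
  intros x y Hx Hy.
  pose proof (delta_cusp_le x Hx). pose proof (delta_cusp_le y Hy).
  pose proof (delta_cusp_ge x Hx). pose proof (delta_cusp_ge y Hy).
  pose proof (cusp_margin_pos x Hx). pose proof (cusp_margin_pos y Hy).
  pose proof (Rmin_l (delta cusp x) (delta cusp y)). pose proof (Rmin_r (delta cusp x) (delta cusp y)).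
  set (m := Rmin (delta cusp x) (delta cusp y)) in *.
  assert (Hm : 0 < m) by (apply Rmin_glb_lt; lra).
  set (t := dist2 x y / m).
  assert (Ht : 0 <= t) by (apply Rdiv_le_0_compat; [apply dist2_nonneg|lra]).
  assert (Hphi : cusp_phi t = 9 * t ^ 2 + 6 * t) by (unfold cusp_phi; ring).
  destruct (Rle_lt_dec (dist2 x y ^ 2) (2 * m)) as [Hclose|Hfar].
  - eapply Rbar_le_trans; [apply (qh_cusp_close x y m); auto; lra|]. simpl. rewrite Hphi.
    replace (dist2 x y / (m / 6)) with (6 * t) by (unfold t; field; lra). nra.
  - eapply Rbar_le_trans; [apply (qh_cusp_via_center x y m); auto; lra|]. simpl. rewrite Hphi.
    assert (18 / m <= 9 * t ^ 2); [|nra].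
    replace (9 * t ^ 2) with (9 * dist2 x y ^ 2 / m / m) by (unfold t; field; lra).
    apply Rmult_le_reg_r with (m * m); [nra|].
    replace (18 / m * (m * m)) with (18 * m) by (field; lra).
    replace (9 * dist2 x y ^ 2 / m / m * (m * m)) with (9 * dist2 x y ^ 2) by (field; lra).
    lra.
Qed.

(** * The complement of the closed cusp *)

Lemma ext_closure_ball G z : ext_closure G z ->
  exists r, 0 < r /\ forall y, dist2 z y < r -> ext_closure G y.
Proof.
  intros Hz. apply not_all_ex_not in Hz as [r Hr]. apply imply_to_and in Hr as [Hr Hn].
  exists (r / 2). split; [lra|]. intros y Hy Hcy.
  destruct (Hcy (r / 2) ltac:(lra)) as [w [Hw Hyw]]. apply Hn. exists w. split; auto.
  pose proof (dist2_triangle z y w). lra.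
Qed.

Lemma delta_ext_closure_pos G z : (exists b, boundary (ext_closure G) b) ->
  ext_closure G z -> 0 < delta (ext_closure G) z.
Proof.
  intros Hb Hz. destruct (ext_closure_ball G z Hz) as [r [Hr Hball]].
  pose proof (delta_ge_ball _ Hb z r Hball). lra.
Qed.

Lemma ext_cusp_of_not_closed z : ~ closed_cusp z -> ext_closure cusp z.
Proof. intros H Hc. apply H, closure_cusp_closed, Hc. Qed.

Lemma ext_cusp_boundary_upper s : 0 < s < 1 -> boundary (ext_closure cusp) (s, s ^ 2).
Proof.
  intros Hs. split.
  - intros r Hr. exists (s, s ^ 2 + r / 2). split.
    + apply ext_cusp_of_not_closed. intros [_ HK]. cbn [fst snd] in HK.
      rewrite Rabs_right in HK by nra. lra.
    + rewrite dist2_vertical. replace (s ^ 2 - (s ^ 2 + r / 2)) with (- (r / 2)) by ring.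
      rewrite Rabs_Ropp, Rabs_right; lra.
  - intros [r [Hr Hi]]. apply (Hi (s, s ^ 2)); [rewrite dist2_refl; lra|].
    apply cusp_rim_in_closure. left. exists s. split; [lra|reflexivity].
Qed.

Lemma ext_cusp_on_axis u : ext_closure cusp (u, 0) -> u < 0 \/ 1 < u.
Proof.
  intros Hc. destruct (Rlt_le_dec u 0) as [|Hu0]; [left; auto|].
  destruct (Rlt_le_dec 1 u) as [|Hu1]; [right; auto|].
  exfalso. apply Hc. destruct (Req_dec u 0) as [->|Hu0'].
  - apply cusp_rim_in_closure. left. exists 0. split; [lra|]. f_equal; ring.
  - destruct (Req_dec u 1) as [->|Hu1'].
    + apply cusp_rim_in_closure. right; right. exists 0. split; [lra|reflexivity].
    + apply cusp_in_closure. unfold cusp; cbn [fst snd]. rewrite Rabs_R0. split; [lra|nra].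
Qed.

(* Near the tip the closed cusp is thinner than [3/2 s^2], so these balls miss it. *)
Lemma ext_cusp_tip_ball s v : 0 < s < 1/4 -> Rabs v = 2 * s ^ 2 ->
  forall z, dist2 (s, v) z < s ^ 2 / 2 -> ext_closure cusp z.
Proof.
  intros Hs Hv [u w] Hz. apply ext_cusp_of_not_closed. intros [_ HK].
  destruct (dist2_lt_coord _ _ _ Hz) as [Hu1 Hv1]; cbn [fst snd] in *.
  apply Rabs_lt_between in Hu1.
  assert (Rabs v <= Rabs w + Rabs (v - w)).
  { replace v with (w + (v - w)) at 1 by ring. apply Rabs_triang. }
  assert (0 < s + s ^ 2 / 2) by nra.
  assert (u ^ 2 < (s + s ^ 2 / 2) ^ 2) by nra.
  assert ((s + s ^ 2 / 2) ^ 2 < 3/2 * s ^ 2).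
  { replace ((s + s ^ 2 / 2) ^ 2) with (s ^ 2 * (1 + s / 2) ^ 2) by field. nra. }
  lra.
Qed.

Lemma snd_clamp_continuity g : cont01 g -> continuity (fun t => - snd (g (clamp t))).
Proof.
  intros Hc t eps Heps.
  destruct (Hc (clamp t) (clamp_range t) eps Heps) as [eta [Heta H]].
  exists eta. split; [lra|]. intros t' [_ Ht']. simpl in *. unfold R_dist in *.
  pose proof (H (clamp t') (clamp_range t')
    ltac:(eapply Rle_lt_trans; [apply clamp_contraction|exact Ht'])) as Hd.
  pose proof (dist2_snd (g (clamp t')) (g (clamp t))).
  replace (- snd (g (clamp t')) - - snd (g (clamp t)))
    with (- (snd (g (clamp t')) - snd (g (clamp t)))) by ring.
  rewrite Rabs_Ropp. lra.
Qed.

Lemma path_crosses_axis g : cont01 g -> 0 < snd (g 0) -> snd (g 1) < 0 ->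
  exists t0, 0 < t0 < 1 /\ snd (g t0) = 0.
Proof.
  intros Hc H0 H1.
  destruct (IVT (fun t => - snd (g (clamp t))) 0 1 (snd_clamp_continuity g Hc) ltac:(lra))
    as [t0 [Ht0 Hz]]; rewrite ?clamp_id by lra; try lra.
  rewrite clamp_id in Hz by lra.
  exists t0. split; [|lra].
  split; apply Rnot_le_lt; intros Ht; [replace t0 with 0 in Hz|replace t0 with 1 in Hz]; lra.
Qed.

(* Every path from [(s, 2 s^2)] to [(s, -2 s^2)] must go around the closed cusp, travelling a
   distance at least [s], while [delta] grows at most linearly from [s^2]. *)
Lemma qh_ext_cusp_tip_ge s : 0 < s < 1/4 ->
  Rbar_le (Finite (ln (s ^ 2 + s) - ln (s ^ 2)))
          (qh_metric (ext_closure cusp) (s, 2 * s ^ 2) (s, - (2 * s ^ 2))).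
Proof.
  intros Hs. set (x := (s, 2 * s ^ 2)).
  assert (Hb : boundary (ext_closure cusp) (s, s ^ 2)) by (apply ext_cusp_boundary_upper; lra).
  assert (Hbd : exists b, boundary (ext_closure cusp) b) by eauto.
  apply qh_metric_ge. intros g v [Hgc [Hg0 [Hg1 HgE]]] Hr Hint.
  destruct (path_crosses_axis g Hgc) as [t0 [Ht0 Hz]];
    [rewrite Hg0; cbn; nra|rewrite Hg1; cbn; nra|].
  assert (Hfar : s <= dist2 (g t0) x).
  { destruct (g t0) as [u w] eqn:Eg. cbn [snd] in Hz. subst w.
    assert (Hu := ext_cusp_on_axis u ltac:(rewrite <- Eg; apply HgE; lra)).
    eapply Rle_trans; [|apply dist2_fst]. unfold x; cbn [fst].
    destruct Hu; [rewrite Rabs_left | rewrite Rabs_right]; lra. }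
  assert (Hw : forall t, 0 <= t <= 1 -> 0 < / delta (ext_closure cusp) (g t) /\
                 / (s ^ 2 + dist2 (g t) x) <= / delta (ext_closure cusp) (g t)).
  { intros t Ht. pose proof (delta_ext_closure_pos cusp (g t) Hbd (HgE t Ht)).
    split; [apply Rinv_0_lt_compat; auto|]. apply Rinv_le_contravar; auto.
    pose proof (delta_le_dist _ (g t) _ Hb). pose proof (dist2_triangle (g t) x (s, s ^ 2)).
    assert (dist2 x (s, s ^ 2) = s ^ 2) by (unfold x; rewrite dist2_vertical, Rabs_right; nra).
    lra. }
  eapply Rle_trans;
    [|exact (is_line_int_ge_log _ g x (s ^ 2) Hr ltac:(nra) Hg0 Hw v t0 Hint Ht0)].
  apply Rplus_le_compat_r, ln_le; nra.
Qed.

Lemma ext_cusp_tip_ratio s : 0 < s < 1/4 ->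
  ext_closure cusp (s, 2 * s ^ 2) /\ ext_closure cusp (s, - (2 * s ^ 2)) /\
  0 <= dist2 (s, 2 * s ^ 2) (s, - (2 * s ^ 2))
       / Rmin (delta (ext_closure cusp) (s, 2 * s ^ 2)) (delta (ext_closure cusp) (s, - (2 * s ^ 2)))
  <= 8.
Proof.
  intros Hs.
  assert (Hbd : exists b, boundary (ext_closure cusp) b)
    by (exists (s, s ^ 2); apply ext_cusp_boundary_upper; lra).
  assert (Hball : forall v, Rabs v = 2 * s ^ 2 ->
            ext_closure cusp (s, v) /\ s ^ 2 / 2 <= delta (ext_closure cusp) (s, v)).
  { intros v Hv. split.
    - apply (ext_cusp_tip_ball s v Hs Hv). rewrite dist2_refl. nra.
    - apply delta_ge_ball; auto. apply ext_cusp_tip_ball; auto. }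
  destruct (Hball (2 * s ^ 2)) as [Hx Hdx]; [apply Rabs_right; nra|].
  destruct (Hball (- (2 * s ^ 2))) as [Hy Hdy]; [rewrite Rabs_Ropp; apply Rabs_right; nra|].
  split; [exact Hx|split; [exact Hy|]].
  assert (Hm : s ^ 2 / 2 <= Rmin (delta (ext_closure cusp) (s, 2 * s ^ 2))
                                 (delta (ext_closure cusp) (s, - (2 * s ^ 2))))
    by (apply Rmin_glb; auto).
  rewrite dist2_vertical. replace (2 * s ^ 2 - - (2 * s ^ 2)) with (4 * s ^ 2) by ring.
  rewrite Rabs_right by nra.
  split; [apply Rdiv_le_0_compat; nra|].
  apply Rmult_le_reg_r with (s ^ 2 / 2); [nra|].
  apply Rle_trans with (4 * s ^ 2); [|lra].
  unfold Rdiv. rewrite Rmult_assoc. rewrite <- (Rmult_1_r (4 * s ^ 2)) at 2.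
  apply Rmult_le_compat_l; [nra|].
  apply Rmult_le_reg_l with (Rmin (delta (ext_closure cusp) (s, 2 * s ^ 2))
                                  (delta (ext_closure cusp) (s, - (2 * s ^ 2)))); [nra|].
  rewrite <- Rmult_assoc, Rinv_r by nra. lra.
Qed.

Lemma ext_cusp_not_uniform : ~ (exists psi, homeo0 psi /\ phi_uniform (ext_closure cusp) psi).
Proof.
  intros [psi [[_ [Hinc _]] Hu]].
  set (s := / (4 + exp (Rabs (psi 8) + 1))).
  pose proof (exp_pos (Rabs (psi 8) + 1)) as Hexp.
  assert (Hs : 0 < s < 1/4).
  { split; [apply Rinv_0_lt_compat; lra|].
    replace (1/4) with (/ 4) by field. apply Rinv_lt_contravar; nra. }
  destruct (ext_cusp_tip_ratio s Hs) as [Hx [Hy Hratio]].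
  assert (Hupper : psi (dist2 (s, 2 * s ^ 2) (s, - (2 * s ^ 2))
                         / Rmin (delta (ext_closure cusp) (s, 2 * s ^ 2))
                                (delta (ext_closure cusp) (s, - (2 * s ^ 2)))) <= psi 8).
  { destruct (proj2 Hratio) as [Hlt|Heq]; [apply Rlt_le, Hinc; lra|rewrite Heq; lra]. }
  assert (Hlower : psi 8 < ln (s ^ 2 + s) - ln (s ^ 2)).
  { rewrite <- ln_div by nra.
    replace ((s ^ 2 + s) / s ^ 2) with (1 + / s) by (field; lra).
    unfold s. rewrite Rinv_inv.
    apply Rle_lt_trans with (ln (exp (Rabs (psi 8) + 1))).
    - rewrite ln_exp. pose proof (Rle_abs (psi 8)). lra.
    - apply ln_increasing; lra. }
  pose proof (Rbar_le_trans _ _ _ (qh_ext_cusp_tip_ge s Hs) (Hu _ _ Hx Hy)) as Hqh.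
  unfold Rbar_le in Hqh. lra.
Qed.

Theorem proposition4p1 :
  exists D : pt -> Prop,
    is_bounded D /\ jordan_domain D /\
    (exists phi, homeo0 phi /\ phi_uniform D phi) /\
    ~ (exists psi, homeo0 psi /\ phi_uniform (ext_closure D) psi).
Proof.
  exists cusp. split; [exact cusp_bounded|]. split; [exact cusp_jordan_domain|]. split.
  - exists cusp_phi. split; [exact cusp_phi_homeo|exact cusp_uniform].
  - exact ext_cusp_not_uniform.
Qed.
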